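(* In the setting described in the context, there is $M>0$ independent of $\epsilon\in(0,1)$ such that for all $(x,y)\in\mathbb{R}^2$ and $t\ge0$, $$|\rho^\epsilon(x,y,t)|\le\frac{M}{\epsilon^{2\alpha}},\qquad \Big|\frac{\partial\rho^\epsilon}{\partial x}(x,y,t)\Big|,\ \Big|\frac{\partial\rho^\epsilon}{\partial y}(x,y,t)\Big|\le\frac{M}{\epsilon^{3\alpha}}.$$
   Context: Let $\mathcal{C}_b(\mathbb{R}^2)$ be the Banach space of bounded continuous real functions on $\mathbb{R}^2$ with sup norm; for real $u$, $u^+=\max(0,u)$, $u^-=\max(0,-u)$. For $0<\epsilon<1$ let $u^\epsilon,v^\epsilon:\mathbb{R}^2\times[0,\infty)\to\mathbb{R}$ be $2\pi$-periodic in $x$ and in $y$, with $t\mapsto u^\epsilon(\cdot,\cdot,t),v^\epsilon(\cdot,\cdot,t)$ continuous into $\mathcal{C}_b(\mathbb{R}^2)$ and bounded uniformly in $\epsilon,x,y,t$. Let $\rho_0^\epsilon\in\mathcal{C}_b(\mathbb{R}^2)$ be $2\pi$-periodic in each variable with $\sup_\epsilon\int_{[-\pi,\pi]^2}|\rho_0^\epsilon|<\infty$. Let $X^\epsilon$ be the global $\mathcal{C}^1$ solution $[0,\infty)\to\mathcal{C}_b(\mathbb{R}^2)$ of $X^\epsilon(x,y,0)=\rho_0^\epsilon(x,y)$ and $$\frac{d}{dt}X^\epsilon(x,y,t)=\frac1\epsilon\big[(X^\epsilon u^{\epsilon+})(x-\epsilon,y,t)-(X^\epsilon|u^\epsilon|)(x,y,t)+(X^\epsilon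 u^{\epsilon-})(x+\epsilon,y,t)+(X^\epsilon v^{\epsilon+})(x,y-\epsilon,t)-(X^\epsilon|v^\epsilon|)(x,y,t)+(X^\epsilon v^{\epsilon-})(x,y+\epsilon,t)\big].$$ Let $\phi\in\mathcal{C}^\infty(\mathbb{R}^2)$ have compact support with $\int\phi=1$, $\alpha\in]0,1]$, $\phi_{\epsilon^\alpha}(x,y)=\epsilon^{-2\alpha}\phi(x/\epsilon^\alpha,y/\epsilon^\alpha)$, and $\rho^\epsilon(x,y,t)=(X^\epsilon(\cdot,\cdot,t)*\phi_{\epsilon^\alpha})(x,y)$. *)

From Stdlib Require Import Reals Lra.
From Coquelicot Require Import Coquelicot.
Open Scope R_scope.

Definition cont2 (f : R -> R -> R) : Prop :=
  forall x y, continuous (fun p : R * R => f (fst p) (snd p)) (x, y).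

Definition Cb (f : R -> R -> R) : Prop :=
  cont2 f /\ exists B, forall x y, Rabs (f x y) <= B.

Definition periodic2 (f : R -> R -> R) : Prop :=
  forall x y, f (x + 2 * PI) y = f x y /\ f x (y + 2 * PI) = f x y.

(* t |-> F(.,.,t) is continuous [0,oo) -> C_b(R^2) (sup norm) *)
Definition cont_Cb (F : R -> R -> R -> R) : Prop :=
  (forall t, 0 <= t -> Cb (fun x y => F x y t)) /\
  forall t, 0 <= t -> forall e, 0 < e -> exists d, 0 < d /\
    forall s, 0 <= s -> Rabs (s - t) < d ->
      forall x y, Rabs (F x y s - F x y t) <= e.

(* D(.,.,t) is the derivative at t of t |-> F(.,.,t) in C_b(R^2) (sup norm),
   one-sided at t = 0 *)
Definition has_Cb_deriv (F D : R -> R -> R -> R) (t : R) : Prop :=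
  forall e, 0 < e -> exists d, 0 < d /\
    forall h, h <> 0 -> 0 <= t + h -> Rabs h < d ->
      forall x y, Rabs ((F x y (t + h) - F x y t) / h - D x y t) <= e.

Definition pos (a : R) : R := Rmax 0 a.
Definition neg (a : R) : R := Rmax 0 (- a).

Definition rhs (eps : R) (u v X : R -> R -> R -> R) (x y t : R) : R :=
  / eps * ( X (x - eps) y t * pos (u (x - eps) y t)
          - X x y t * Rabs (u x y t)
          + X (x + eps) y t * neg (u (x + eps) y t)
          + X x (y - eps) t * pos (v x (y - eps) t)
          - X x y t * Rabs (v x y t)
          + X x (y + eps) t * neg (v x (y + eps) t)).

Definition is_C1_solution (eps : R) (u v X : R -> R -> R -> R)
    (r0 : R -> R -> R) : Prop :=
  cont_Cb X /\
  (forall x y, X x y 0 = r0 x y) /\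
  (forall t, 0 <= t -> has_Cb_deriv X (rhs eps u v X) t) /\
  cont_Cb (rhs eps u v X).

Definition dx (f : R -> R -> R) : R -> R -> R :=
  fun x y => Derive (fun x' => f x' y) x.
Definition dy (f : R -> R -> R) : R -> R -> R :=
  fun x y => Derive (fun y' => f x y') y.

Fixpoint Ck (k : nat) (f : R -> R -> R) : Prop :=
  match k with
  | O => cont2 f
  | S k' => cont2 f /\
      (forall x y, ex_derive (fun x' => f x' y) x) /\
      (forall x y, ex_derive (fun y' => f x y') y) /\
      Ck k' (dx f) /\ Ck k' (dy f)
  end.

Definition smooth2 (f : R -> R -> R) : Prop := forall k, Ck k f.

Definition compact_support2 (f : R -> R -> R) : Prop :=
  exists K, forall a b, K < Rabs a \/ K < Rabs b -> f a b = 0.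

Definition int_R2 (f : R -> R -> R) : R :=
  RInt_gen (fun a => RInt_gen (fun b => f a b)
                       (Rbar_locally m_infty) (Rbar_locally p_infty))
           (Rbar_locally m_infty) (Rbar_locally p_infty).

Definition int_cell (f : R -> R -> R) : R :=
  RInt (fun a => RInt (fun b => f a b) (- PI) PI) (- PI) PI.

Definition moll (phi : R -> R -> R) (delta : R) : R -> R -> R :=
  fun a b => / (delta ^ 2) * phi (a / delta) (b / delta).

Definition conv2 (f g : R -> R -> R) (x y : R) : R :=
  int_R2 (fun a b => f (x - a) (y - b) * g a b).

Definition rho (X : R -> R -> R -> R -> R) (phi : R -> R -> R) (alpha : R)
    (eps x y t : R) : R :=
  conv2 (fun a b => X eps a b t) (moll phi (Rpower eps alpha)) x y.

From Pilot Require Import Defs.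
From Stdlib Require Import Reals Lra Classical ClassicalEpsilon FunctionalExtensionality.
From Coquelicot Require Import Coquelicot.
Open Scope R_scope.

(** The scheme is a linear evolution equation, commuting with translations and
    Lipschitz in the sup norm, so its solution is unique and inherits the
    2pi-periodicity of the data.  It is also an upwind scheme: testing it
    against the derivative of the smoothed modulus [sqrt (X^2 + d^2)] and using
    periodicity to cancel the transport terms over the period cell shows that
    the L1 norm of [X^eps(t)] on the cell never exceeds that of [rho0^eps],
    uniformly in [eps].  Finally [rho^eps] integrates [X^eps] against the kernel
    [phi_delta], [delta = eps^alpha], which is [O(delta^-2)] (its derivatives
    [O(delta^-3)]) and supported in a square of side [O(1)], a square that
    meets a bounded number of period cells. *)

Lemma continuous_of_eps_delta (f : R -> R) (x : R) :
  (forall e, 0 < e -> exists d, 0 < d /\ forall y, Rabs (y - x) < d -> Rabs (f y - f x) < e) ->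
  continuous f x.
Proof.
  intros H. apply continuity_pt_filterlim.
  intros e He. destruct (H e He) as [d [Hd H']].
  exists d; split; auto. intros y [_ Hy]. apply H'. exact Hy.
Qed.

Lemma eps_delta_of_continuous (f : R -> R) (x : R) : continuous f x ->
  forall e, 0 < e -> exists d, 0 < d /\ forall y, Rabs (y - x) < d -> Rabs (f y - f x) < e.
Proof.
  intros H%continuity_pt_filterlim e He.
  destruct (H e He) as [d [Hd H']]. exists d; split; auto.
  intros y Hy. destruct (Req_dec y x) as [->|].
  - rewrite Rminus_diag, Rabs_R0; auto.
  - apply H'. split; [split; auto|exact Hy]. exact I.
Qed.

Lemma cont2_continuity_2d_pt (f : R -> R -> R) x y : cont2 f -> continuity_2d_pt f x y.
Proof. intros H. apply continuity_2d_pt_filterlim. apply H. Qed.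

Lemma cont2_const c : cont2 (fun _ _ => c).
Proof. intros x y. apply continuous_const. Qed.

Lemma cont2_fst : cont2 (fun a _ => a).
Proof. intros x y. apply continuous_fst. Qed.

Lemma cont2_snd : cont2 (fun _ b => b).
Proof. intros x y. apply continuous_snd. Qed.

Lemma cont2_comp2 (f g1 g2 : R -> R -> R) : cont2 f -> cont2 g1 -> cont2 g2 ->
  cont2 (fun a b => f (g1 a b) (g2 a b)).
Proof.
  intros Hf H1 H2 x y.
  apply (continuous_comp_2 (fun p : R * R => g1 (fst p) (snd p))
                            (fun p : R * R => g2 (fst p) (snd p)) f); auto.
Qed.

Lemma cont2_comp1 (g : R -> R) (f : R -> R -> R) : (forall z, continuous g z) -> cont2 f ->
  cont2 (fun a b => g (f a b)).
Proof.
  intros Hg Hf x y.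
  apply (continuous_comp (fun p : R * R => f (fst p) (snd p)) g); auto.
Qed.

Lemma cont2_plus f g : cont2 f -> cont2 g -> cont2 (fun a b => f a b + g a b).
Proof.
  intros Hf Hg x y. apply (continuous_plus (fun p : R * R => f (fst p) (snd p))
     (fun p : R * R => g (fst p) (snd p))); auto.
Qed.

Lemma cont2_opp f : cont2 f -> cont2 (fun a b => - f a b).
Proof.
  intros Hf x y. apply (continuous_opp (fun p : R * R => f (fst p) (snd p))); auto.
Qed.

Lemma cont2_minus f g : cont2 f -> cont2 g -> cont2 (fun a b => f a b - g a b).
Proof. intros. apply cont2_plus; auto. apply cont2_opp; auto. Qed.

Lemma cont2_mult f g : cont2 f -> cont2 g -> cont2 (fun a b => f a b * g a b).
Proof.
  intros Hf Hg x y. apply (continuous_mult (fun p : R * R => f (fst p) (snd p))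
     (fun p : R * R => g (fst p) (snd p))); auto.
Qed.

Lemma cont2_abs f : cont2 f -> cont2 (fun a b => Rabs (f a b)).
Proof. intros. apply cont2_comp1; auto. apply continuous_Rabs. Qed.

Lemma cont2_shift_x f c : cont2 f -> cont2 (fun a b => f (a + c) b).
Proof.
  intros H. apply (cont2_comp2 f (fun a _ => a + c) (fun _ b => b)); auto using cont2_snd.
  apply cont2_plus; [apply cont2_fst|apply cont2_const].
Qed.

Lemma cont2_shift_y f c : cont2 f -> cont2 (fun a b => f a (b + c)).
Proof.
  intros H. apply (cont2_comp2 f (fun a _ => a) (fun _ b => b + c)); auto using cont2_fst.
  apply cont2_plus; [apply cont2_snd|apply cont2_const].
Qed.

Lemma cont2_reflect f x y : cont2 f -> cont2 (fun a b => f (x - a) (y - b)).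
Proof.
  intros H. apply (cont2_comp2 f (fun a _ => x - a) (fun _ b => y - b)); auto.
  - apply cont2_minus; [apply cont2_const|apply cont2_fst].
  - apply cont2_minus; [apply cont2_const|apply cont2_snd].
Qed.

Lemma cont2_rescale psi k d : cont2 psi -> cont2 (fun a b => k * psi (a / d) (b / d)).
Proof.
  intros H. apply cont2_mult; [apply cont2_const|].
  apply (cont2_comp2 psi (fun a _ => a / d) (fun _ b => b / d)); auto.
  - apply cont2_mult; [apply cont2_fst|apply cont2_const].
  - apply cont2_mult; [apply cont2_snd|apply cont2_const].
Qed.

Lemma cont2_continuous_y f a : cont2 f -> forall b, continuous (fun b => f a b) b.
Proof.
  intros H b. apply continuous_of_eps_delta. intros e He.
  destruct (cont2_continuity_2d_pt f a b H (mkposreal e He)) as [d Hd].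
  exists d; split; [apply cond_pos|]. intros y Hy. apply Hd; auto.
  rewrite Rminus_diag, Rabs_R0; apply cond_pos.
Qed.

Lemma Cb_cont2 f : Cb f -> cont2 f.
Proof. intros [H _]; auto. Qed.

Lemma continuous_pos z : continuous Defs.pos z.
Proof.
  unfold Defs.pos. apply continuous_of_eps_delta. intros e He. exists e; split; auto. intros y Hy.
  unfold Rmax; repeat destruct Rle_dec; unfold Rabs in *; repeat destruct Rcase_abs; lra.
Qed.

Lemma continuous_neg z : continuous Defs.neg z.
Proof.
  unfold Defs.neg. apply continuous_of_eps_delta. intros e He. exists e; split; auto. intros y Hy.
  unfold Rmax; repeat destruct Rle_dec; unfold Rabs in *; repeat destruct Rcase_abs; lra.
Qed.

Lemma pos_bounds a : 0 <= Defs.pos a <= Rabs a.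
Proof. unfold Defs.pos, Rmax, Rabs; destruct Rle_dec, Rcase_abs; lra. Qed.

Lemma neg_bounds a : 0 <= Defs.neg a <= Rabs a.
Proof. unfold Defs.neg, Rmax, Rabs; destruct Rle_dec, Rcase_abs; lra. Qed.

Lemma Rabs_pos_neg a : Rabs a = Defs.pos a + Defs.neg a.
Proof. unfold Defs.pos, Defs.neg, Rmax, Rabs; repeat destruct Rle_dec; destruct Rcase_abs; lra. Qed.

Create HintDb cont2.

Ltac cont2_auto :=
  lazymatch goal with
  | |- cont2 (fun a b => @?f a b * @?g a b) => apply (cont2_mult f g); cont2_auto
  | |- cont2 (fun a b => @?f a b + @?g a b) => apply (cont2_plus f g); cont2_auto
  | |- cont2 (fun a b => @?f a b - @?g a b) => apply (cont2_minus f g); cont2_auto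
  | |- cont2 (fun a b => - @?f a b) => apply (cont2_opp f); cont2_auto
  | |- cont2 (fun a b => Rabs (@?f a b)) => apply (cont2_abs f); cont2_auto
  | |- cont2 (fun a b => Defs.pos (@?f a b)) => apply (cont2_comp1 Defs.pos f); [apply continuous_pos|cont2_auto]
  | |- cont2 (fun a b => Defs.neg (@?f a b)) => apply (cont2_comp1 Defs.neg f); [apply continuous_neg|cont2_auto]
  | |- _ => first [ assumption | apply cont2_const
                  | apply cont2_shift_x; cont2_auto | apply cont2_shift_y; cont2_auto
                  | match goal with |- cont2 (fun a b => ?g (@?f a b)) =>
                      apply (cont2_comp1 g f); [intros; auto with cont2|cont2_auto] end ]
  end.

Lemma RInt_minus_R (f g : R -> R) a b : ex_RInt f a b -> ex_RInt g a b ->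
  RInt (fun x => f x - g x) a b = RInt f a b - RInt g a b.
Proof. intros. apply (RInt_minus f g); auto. Qed.

Lemma RInt_plus_R (f g : R -> R) a b : ex_RInt f a b -> ex_RInt g a b ->
  RInt (fun x => f x + g x) a b = RInt f a b + RInt g a b.
Proof. intros. apply (RInt_plus f g); auto. Qed.

Lemma RInt_scal_R (f : R -> R) a b k : ex_RInt f a b ->
  RInt (fun x => k * f x) a b = k * RInt f a b.
Proof. intros. apply (RInt_scal f); auto. Qed.

Lemma RInt_swap_R (f : R -> R) a b : ex_RInt f a b -> RInt f b a = - RInt f a b.
Proof. intros H. rewrite <- (opp_RInt_swap f a b H). reflexivity. Qed.

Lemma RInt_Chasles_R (f : R -> R) a b c : ex_RInt f a b -> ex_RInt f b c ->
  RInt f a b + RInt f b c = RInt f a c.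
Proof. intros. apply (RInt_Chasles f); auto. Qed.

Lemma RInt_zero_R (f : R -> R) a b : (forall z, f z = 0) -> RInt f a b = 0.
Proof.
  intros H. rewrite (RInt_ext f (fun _ => 0)) by (intros; apply H).
  rewrite RInt_const. apply Rmult_0_r.
Qed.

Lemma ex_RInt_continuous_R (f : R -> R) a b :
  (forall z, Rmin a b <= z <= Rmax a b -> continuous f z) -> ex_RInt f a b.
Proof. intros H. apply (ex_RInt_continuous (V:=R_CompleteNormedModule)); auto. Qed.

Lemma abs_RInt_le_const_R (g : R -> R) p q M : ex_RInt g p q ->
  (forall z, Rmin p q <= z <= Rmax p q -> Rabs (g z) <= M) ->
  Rabs (RInt g p q) <= Rabs (q - p) * M.
Proof.
  intros Hex Hb. destruct (Rle_dec p q) as [Hpq|Hpq].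
  - rewrite (Rabs_right (q - p)) by lra. apply abs_RInt_le_const; auto.
    intros t Ht. apply Hb. rewrite Rmin_left, Rmax_right; lra.
  - rewrite RInt_swap_R, Rabs_Ropp by (apply ex_RInt_swap; auto).
    rewrite (Rabs_left (q - p)), Ropp_minus_distr by lra.
    apply abs_RInt_le_const; [lra|apply ex_RInt_swap; auto|].
    intros t Ht. apply Hb. rewrite Rmin_right, Rmax_left; lra.
Qed.

Lemma RInt_shift_R (f : R -> R) c p q : (forall z, continuous f z) ->
  RInt (fun z => f (z + c)) p q = RInt f (p + c) (q + c).
Proof.
  intros Hf. pose proof (RInt_comp_lin f 1 c p q) as H.
  replace (p + c) with (1 * p + c) by ring. replace (q + c) with (1 * q + c) by ring.
  rewrite <- H by (apply ex_RInt_continuous_R; auto).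
  apply RInt_ext. intros z _. unfold scal; simpl; unfold mult; simpl. rewrite !Rmult_1_l. reflexivity.
Qed.

Lemma RInt_reflect_R (f : R -> R) y p q : (forall z, continuous f z) ->
  RInt (fun z => f (y - z)) p q = RInt f (y - q) (y - p).
Proof.
  intros Hf.
  assert (Hc : forall z, continuous (fun z => f (y - z)) z).
  { intros z. apply (continuous_comp (fun z => y - z) f); [|apply Hf].
    apply (continuous_minus (fun _ => y) (fun z => z)); [apply continuous_const|apply continuous_id]. }
  replace (y - p) with (-1 * p + y) by ring. replace (y - q) with (-1 * q + y) by ring.
  rewrite <- (RInt_comp_lin f (-1) y q p) by (apply ex_RInt_continuous_R; auto).
  rewrite (RInt_ext (fun z => scal (-1) (f (-1 * z + y))) (fun z => -1 * f (y - z)))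
    by (intros z _; replace (-1 * z + y) with (y - z) by ring; reflexivity).
  rewrite RInt_scal_R, (RInt_swap_R _ q p) by (apply ex_RInt_continuous_R; auto). lra.
Qed.

Lemma RInt_gen_supported (f : R -> R) y e W R0 : (forall z, continuous f z) ->
  (forall z, R0 < Rabs z -> f z = 0) -> e - W <= y - R0 -> y + R0 <= e + W ->
  RInt_gen f (Rbar_locally m_infty) (Rbar_locally p_infty) =
  RInt (fun z => f (y - z)) (e - W) (e + W).
Proof.
  intros Hc Hz H1 H2.
  set (L := y - (e + W)). set (U := y - (e - W)).
  assert (Hex : forall p q, ex_RInt f p q) by (intros; apply ex_RInt_continuous_R; auto).
  assert (Hzero : forall p q, (forall z, Rmin p q < z < Rmax p q -> R0 < Rabs z) -> RInt f p q = 0).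
  { intros p q Hpq. rewrite (RInt_ext f (fun _ => 0)) by (intros; apply Hz, Hpq; auto).
    rewrite RInt_const. apply Rmult_0_r. }
  rewrite RInt_reflect_R by auto. fold L U.
  apply is_RInt_gen_unique.
  intros P [eps HP]. exists (fun a => a < L) (fun b => U < b).
  - exists L. auto.
  - exists U. auto.
  - intros a b Ha Hb. exists (RInt f L U). split; [|apply HP, ball_center].
    simpl. replace (RInt f L U) with (RInt f a b); [apply RInt_correct, Hex|].
    rewrite <- (RInt_Chasles_R f a L b), <- (RInt_Chasles_R f L U b) by auto.
    rewrite (Hzero a L), (Hzero U b); [lra| |];
      intros z Hz'; rewrite Rmin_left, Rmax_right in Hz' by lra;
      unfold Rabs; destruct Rcase_abs; unfold L, U in *; lra.
Qed.

Lemma ex_RInt_y F a p q : cont2 F -> ex_RInt (fun b => F a b) p q.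
Proof. intros H. apply ex_RInt_continuous_R. intros z _. apply cont2_continuous_y; auto. Qed.

Lemma continuous_RInt_param F p q a0 : cont2 F ->
  continuous (fun a => RInt (fun b => F a b) p q) a0.
Proof.
  intros H. apply continuous_of_eps_delta. intros e He.
  set (e' := e / (2 * (Rabs (q - p) + 1))).
  assert (He' : 0 < e') by (unfold e'; apply Rdiv_lt_0_compat; [lra|]; pose proof (Rabs_pos (q-p)); lra).
  destruct (uniform_continuity_2d F (a0 - 1) (a0 + 1) (Rmin p q) (Rmax p q))
    with (eps := mkposreal e' He') as [d Hd].
  { intros. apply cont2_continuity_2d_pt; auto. }
  exists (Rmin d 1). split. { apply Rmin_pos; [apply cond_pos|lra]. }
  intros y Hy.
  rewrite <- RInt_minus_R by (apply ex_RInt_y; auto).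
  eapply Rle_lt_trans. apply (abs_RInt_le_const_R _ _ _ e').
  { apply (ex_RInt_minus (V:=R_NormedModule)); apply ex_RInt_y; auto. }
  { intros z Hz. left. simpl in Hd.
    assert (H1 : Rabs (y - a0) < d) by (eapply Rlt_le_trans; [exact Hy|apply Rmin_l]).
    assert (H2 : Rabs (y - a0) < 1) by (eapply Rlt_le_trans; [exact Hy|apply Rmin_r]).
    apply Rabs_lt_between' in H2.
    apply Hd; try lra.
    rewrite Rminus_diag, Rabs_R0. apply cond_pos. }
  unfold e'. pose proof (Rabs_pos (q-p)).
  apply Rle_lt_trans with (e * (Rabs (q - p) / (2 * (Rabs (q - p) + 1)))).
  { right. field. lra. }
  rewrite <- (Rmult_1_r e) at 2. apply Rmult_lt_compat_l; auto.
  apply Rmult_lt_reg_r with (2 * (Rabs (q - p) + 1)). lra.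
  field_simplify; lra.
Qed.

Lemma ex_RInt_param F p q r s : cont2 F ->
  ex_RInt (fun a => RInt (fun b => F a b) p q) r s.
Proof. intros H. apply ex_RInt_continuous_R. intros z _. apply continuous_RInt_param; auto. Qed.

Definition RInt2 (F : R -> R -> R) a1 a2 b1 b2 :=
  RInt (fun a => RInt (fun b => F a b) b1 b2) a1 a2.

Lemma RInt2_ext F G a1 a2 b1 b2 : (forall a b, F a b = G a b) ->
  RInt2 F a1 a2 b1 b2 = RInt2 G a1 a2 b1 b2.
Proof. intros H. apply RInt_ext. intros. apply RInt_ext. intros. apply H. Qed.

Lemma RInt2_const c a1 a2 b1 b2 : RInt2 (fun _ _ => c) a1 a2 b1 b2 = (a2 - a1) * ((b2 - b1) * c).
Proof.
  unfold RInt2. rewrite (RInt_ext _ (fun _ => (b2 - b1) * c)).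
  - rewrite RInt_const. reflexivity.
  - intros. rewrite RInt_const. reflexivity.
Qed.

Lemma RInt2_minus F G a1 a2 b1 b2 : cont2 F -> cont2 G ->
  RInt2 (fun a b => F a b - G a b) a1 a2 b1 b2 = RInt2 F a1 a2 b1 b2 - RInt2 G a1 a2 b1 b2.
Proof.
  intros HF HG. unfold RInt2. rewrite <- RInt_minus_R by (apply ex_RInt_param; auto).
  apply RInt_ext. intros. apply RInt_minus_R; apply ex_RInt_y; auto.
Qed.

Lemma RInt2_plus F G a1 a2 b1 b2 : cont2 F -> cont2 G ->
  RInt2 (fun a b => F a b + G a b) a1 a2 b1 b2 = RInt2 F a1 a2 b1 b2 + RInt2 G a1 a2 b1 b2.
Proof.
  intros HF HG. unfold RInt2. rewrite <- RInt_plus_R by (apply ex_RInt_param; auto).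
  apply RInt_ext. intros. apply RInt_plus_R; apply ex_RInt_y; auto.
Qed.

Lemma RInt2_scal F k a1 a2 b1 b2 : cont2 F ->
  RInt2 (fun a b => k * F a b) a1 a2 b1 b2 = k * RInt2 F a1 a2 b1 b2.
Proof.
  intros HF. unfold RInt2. rewrite <- RInt_scal_R by (apply ex_RInt_param; auto).
  apply RInt_ext. intros. apply RInt_scal_R; apply ex_RInt_y; auto.
Qed.

Lemma RInt2_le F G a1 a2 b1 b2 : cont2 F -> cont2 G -> a1 <= a2 -> b1 <= b2 ->
  (forall a b, a1 <= a <= a2 -> b1 <= b <= b2 -> F a b <= G a b) ->
  RInt2 F a1 a2 b1 b2 <= RInt2 G a1 a2 b1 b2.
Proof.
  intros HF HG Ha Hb H. apply RInt_le; auto using ex_RInt_param.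
  intros a Ha'. apply RInt_le; auto using ex_RInt_y.
  intros b Hb'. apply H; lra.
Qed.

Lemma abs_RInt2_le_const F a1 a2 b1 b2 M : cont2 F -> a1 <= a2 -> b1 <= b2 ->
  (forall a b, a1 <= a <= a2 -> b1 <= b <= b2 -> Rabs (F a b) <= M) ->
  Rabs (RInt2 F a1 a2 b1 b2) <= (a2 - a1) * ((b2 - b1) * M).
Proof.
  intros HF Ha Hb H.
  replace (a2 - a1) with (Rabs (a2 - a1)) by (apply Rabs_right; lra).
  apply abs_RInt_le_const_R; [apply ex_RInt_param; auto|].
  intros a Ha'. replace (b2 - b1) with (Rabs (b2 - b1)) by (apply Rabs_right; lra).
  apply abs_RInt_le_const_R; [apply ex_RInt_y; auto|].
  intros b Hb'. rewrite Rmin_left, Rmax_right in Ha', Hb' by lra. apply H; lra.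
Qed.

Lemma abs_RInt2_le F a1 a2 b1 b2 : cont2 F -> a1 <= a2 -> b1 <= b2 ->
  Rabs (RInt2 F a1 a2 b1 b2) <= RInt2 (fun a b => Rabs (F a b)) a1 a2 b1 b2.
Proof.
  intros HF Ha Hb.
  eapply Rle_trans; [apply abs_RInt_le; auto using ex_RInt_param|].
  apply RInt_le; auto.
  - apply ex_RInt_continuous_R. intros. apply continuous_Rabs_comp, continuous_RInt_param; auto.
  - apply ex_RInt_param, cont2_abs; auto.
  - intros a _. apply abs_RInt_le; auto using ex_RInt_y.
Qed.

Lemma eq0_of_Rabs_le_all_pos a : (forall e, 0 < e -> Rabs a <= e) -> a = 0.
Proof.
  intros H. apply Rabs_eq_0, Rle_antisym; [|apply Rabs_pos].
  apply Rle_plus_epsilon. intros e He. rewrite Rplus_0_l. auto.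
Qed.

Lemma eq0_of_Rabs_le_half_pow a : (forall n, Rabs a <= (1/2) ^ n) -> a = 0.
Proof.
  intros H. apply eq0_of_Rabs_le_all_pos. intros e He.
  destruct (pow_lt_1_zero (1/2)) with e as [N HN]; auto.
  { rewrite Rabs_right; lra. }
  specialize (HN N (le_n N)). rewrite Rabs_right in HN.
  - specialize (H N). lra.
  - apply Rle_ge, pow_le. lra.
Qed.

Lemma le_of_le_plus_mul a b k : (forall e, 0 < e -> a <= b + e * k) -> a <= b.
Proof.
  intros H. apply Rle_plus_epsilon. intros e He.
  pose proof (Rabs_pos k).
  assert (Hd : 0 < e / (Rabs k + 1)) by (apply Rdiv_lt_0_compat; lra).
  specialize (H _ Hd).
  assert (e / (Rabs k + 1) * k <= e / (Rabs k + 1) * Rabs k)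
    by (apply Rmult_le_compat_l; [lra|apply Rle_abs]).
  assert (e / (Rabs k + 1) * Rabs k <= e).
  { apply Rmult_le_reg_r with (Rabs k + 1); [lra|]. field_simplify; nra. }
  lra.
Qed.

(** [MVT_gen] is applied to the extension of [f] by constants outside [a, b],
    with the derivative clamped to [K]. *)
Lemma increment_le_of_derive_le (f df : R -> R) a b K : a < b ->
  (forall t, a < t < b -> is_derive f t (df t)) ->
  (forall t, a <= t <= b -> forall e, 0 < e -> exists d, 0 < d /\
     forall s, a <= s <= b -> Rabs (s - t) < d -> Rabs (f s - f t) < e) ->
  (forall t, a < t < b -> df t <= K) -> f b - f a <= K * (b - a).
Proof.
  intros Hab Hd Hc HK.
  set (c := fun s => Rmax a (Rmin b s)).
  assert (Hc1 : forall s, a <= c s <= b).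
  { intros s; unfold c, Rmax, Rmin; repeat destruct Rle_dec; lra. }
  assert (Hc2 : forall s, a <= s <= b -> c s = s).
  { intros s Hs; unfold c, Rmax, Rmin; repeat destruct Rle_dec; lra. }
  assert (Hc3 : forall s t, Rabs (c s - c t) <= Rabs (s - t)).
  { intros s t; unfold c, Rmax, Rmin, Rabs; repeat destruct Rle_dec; repeat destruct Rcase_abs; lra. }
  set (g := fun s => f (c s)).
  set (df' := fun t => if Rle_dec (df t) K then df t else K).
  destruct (MVT_gen g a b df') as [x [Hx Heq]].
  - intros t Ht. rewrite Rmin_left, Rmax_right in Ht by lra.
    unfold df'. destruct Rle_dec as [_|Hn]; [|exfalso; apply Hn; apply HK; auto].
    apply is_derive_ext_loc with f; [|apply Hd; auto].
    assert (Hr : 0 < Rmin (t - a) (b - t)) by (apply Rmin_pos; lra).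
    exists (mkposreal _ Hr). intros s Hs. unfold g. rewrite Hc2; auto.
    change (Rabs (s - t) < Rmin (t - a) (b - t)) in Hs.
    pose proof (Rmin_l (t-a) (b-t)); pose proof (Rmin_r (t-a) (b-t)).
    unfold Rabs in Hs; destruct Rcase_abs in Hs; lra.
  - intros t Ht. rewrite Rmin_left, Rmax_right in Ht by lra.
    apply continuity_pt_filterlim. apply continuous_of_eps_delta. intros e He.
    destruct (Hc t Ht e He) as [d [Hdp Hd']]. exists d; split; auto.
    intros y Hy. unfold g. rewrite (Hc2 t Ht).
    apply Hd'; [apply Hc1|].
    assert (Hc3' := Hc3 y t). rewrite (Hc2 t Ht) in Hc3'. lra.
  - unfold g in Heq. rewrite !Hc2 in Heq by lra. rewrite Heq.
    rewrite Rmin_left, Rmax_right in Hx by lra.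
    apply Rmult_le_compat_r; [lra|]. unfold df'. destruct Rle_dec; lra.
Qed.

Lemma abs_increment_le_of_derive_abs_le (f df : R -> R) a b K : a < b ->
  (forall t, a < t < b -> is_derive f t (df t)) ->
  (forall t, a <= t <= b -> forall e, 0 < e -> exists d, 0 < d /\
     forall s, a <= s <= b -> Rabs (s - t) < d -> Rabs (f s - f t) < e) ->
  (forall t, a < t < b -> Rabs (df t) <= K) -> Rabs (f b - f a) <= K * (b - a).
Proof.
  intros Hab Hd Hc HK. apply Rabs_le. split.
  - enough (- f b - - f a <= K * (b - a)) by lra.
    apply (increment_le_of_derive_le (fun s => - f s) (fun t => - df t)); auto.
    + intros t Ht. apply (is_derive_opp f). auto.
    + intros t Ht e He. destruct (Hc t Ht e He) as [d [Hd1 Hd2]]. exists d; split; auto.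
      intros s Hs Hst. replace (- f s - - f t) with (- (f s - f t)) by ring.
      rewrite Rabs_Ropp. auto.
    + intros t Ht. specialize (HK t Ht). apply Rabs_le_between in HK. lra.
  - apply increment_le_of_derive_le with df; auto. intros t Ht. specialize (HK t Ht).
    apply Rabs_le_between in HK. lra.
Qed.

Lemma abs_increment_le (f df : R -> R) a b K : (forall s, is_derive f s (df s)) ->
  (forall s, Rmin a b <= s <= Rmax a b -> Rabs (df s) <= K) ->
  Rabs (f b - f a) <= K * Rabs (b - a).
Proof.
  intros Hd HK.
  assert (Hc : forall p q, p < q -> forall t, p <= t <= q -> forall e, 0 < e -> exists d, 0 < d /\
            forall s, p <= s <= q -> Rabs (s - t) < d -> Rabs (f s - f t) < e).
  { intros p q _ t _ e He.
    destruct (eps_delta_of_continuous f t) with e as [d [Hd0 H']]; auto.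
    - apply (ex_derive_continuous (K:=R_AbsRing) (V:=R_NormedModule)). eexists; apply Hd.
    - exists d; split; auto. }
  destruct (Rtotal_order a b) as [H|[H|H]].
  - rewrite (Rabs_right (b - a)) by lra.
    apply abs_increment_le_of_derive_abs_le with df; auto.
    intros t Ht. apply HK. rewrite Rmin_left, Rmax_right; lra.
  - subst. rewrite !Rminus_diag, Rabs_R0, Rmult_0_r. lra.
  - rewrite Rabs_minus_sym, (Rabs_minus_sym b), (Rabs_right (a - b)) by lra.
    apply abs_increment_le_of_derive_abs_le with df; auto.
    intros t Ht. apply HK. rewrite Rmin_right, Rmax_left; lra.
Qed.

Lemma taylor_remainder_le (f df : R -> R) K z h : (forall s, is_derive f s (df s)) ->
  (forall a b, Rabs (df b - df a) <= K * Rabs (b - a)) ->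
  Rabs (f (z + h) - f z - h * df z) <= K * h ^ 2.
Proof.
  intros Hd HK.
  assert (Hg : forall r, is_derive (fun r => f r - df z * r) r (df r - df z)).
  { intros r.
    assert (Hl : is_derive (fun r => df z * r) r (df z * 1)) by apply is_derive_scal, (is_derive_id r).
    assert (H := is_derive_minus _ _ _ _ _ (Hd r) Hl). rewrite Rmult_1_r in H. exact H. }
  replace (f (z + h) - f z - h * df z) with
    ((f (z + h) - df z * (z + h)) - (f z - df z * z)) by ring.
  replace (K * h ^ 2) with ((K * Rabs h) * Rabs (z + h - z)) by
    (replace (z + h - z) with h by ring; rewrite <- (pow2_abs h); ring).
  apply (abs_increment_le _ _ z (z + h) (K * Rabs h) Hg).
  intros s Hs. eapply Rle_trans; [apply HK|].
  assert (0 <= K) by (specialize (HK 0 1); rewrite Rminus_0_r, Rabs_R1 in HK;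
                      pose proof (Rabs_pos (df 1 - df 0)); lra).
  apply Rmult_le_compat_l; auto.
  unfold Rmin, Rmax in Hs; destruct Rle_dec in Hs; unfold Rabs; repeat destruct Rcase_abs; lra.
Qed.

Lemma taylor_remainder_le_of_second_derive (f f1 f2 : R -> R) M z h :
  (forall s, is_derive f s (f1 s)) -> (forall s, is_derive f1 s (f2 s)) ->
  (forall s, Rabs (f2 s) <= M) ->
  Rabs (f (z + h) - f z - h * f1 z) <= M * h ^ 2.
Proof.
  intros H1 H2 HM. apply taylor_remainder_le; auto.
  intros a b. apply (abs_increment_le f1 f2); auto.
Qed.

Lemma has_Cb_deriv_is_derive F D t x y : 0 < t -> has_Cb_deriv F D t ->
  is_derive (fun s => F x y s) t (D x y t).
Proof.
  intros Ht H. apply is_derive_Reals. intros e He.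
  destruct (H (e/2)) as [d [Hd H']]; [lra|].
  assert (Hm : 0 < Rmin d t) by (apply Rmin_pos; lra).
  exists (mkposreal _ Hm). intros h Hh Hhd. simpl in Hhd.
  eapply Rle_lt_trans; [apply H'; auto|lra].
  - pose proof (Rmin_r d t). apply Rabs_lt_between in Hhd. lra.
  - pose proof (Rmin_l d t). lra.
Qed.

Lemma is_derive_RInt2 (F : R -> R -> R -> R) (G : R -> R -> R) s0 r a1 a2 b1 b2 :
  a1 <= a2 -> b1 <= b2 -> 0 < r -> (forall s, Rabs (s - s0) < r -> cont2 (F s)) -> cont2 G ->
  (forall e, 0 < e -> exists d, 0 < d /\ forall h, h <> 0 -> Rabs h < d ->
     forall a b, a1 <= a <= a2 -> b1 <= b <= b2 ->
     Rabs (F (s0 + h) a b - F s0 a b - h * G a b) <= e * Rabs h) ->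
  is_derive (fun s => RInt2 (F s) a1 a2 b1 b2) s0 (RInt2 G a1 a2 b1 b2).
Proof.
  intros Ha Hb Hr HF HG HU. apply is_derive_Reals. intros e He.
  set (A := (a2 - a1) * (b2 - b1) + 1).
  assert (HA : 0 < A) by (unfold A; nra).
  destruct (HU (e / (2 * A))) as [d [Hd Hrem]]; [apply Rdiv_lt_0_compat; lra|].
  assert (Hm : 0 < Rmin d r) by (apply Rmin_pos; lra).
  exists (mkposreal _ Hm). intros h Hh0 Hh. simpl in Hh.
  assert (Hh1 : Rabs h < d) by (eapply Rlt_le_trans; [exact Hh|apply Rmin_l]).
  assert (Hh2 : Rabs (s0 + h - s0) < r)
    by (replace (s0 + h - s0) with h by ring; eapply Rlt_le_trans; [exact Hh|apply Rmin_r]).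
  assert (HhA : 0 < Rabs h) by (apply Rabs_pos_lt; auto).
  assert (cF0 : cont2 (F s0)) by (apply HF; rewrite Rminus_diag, Rabs_R0; lra).
  assert (cF1 := HF _ Hh2).
  assert (E : RInt2 (fun a b => F (s0 + h) a b - F s0 a b - h * G a b) a1 a2 b1 b2 =
              RInt2 (F (s0 + h)) a1 a2 b1 b2 - RInt2 (F s0) a1 a2 b1 b2 - h * RInt2 G a1 a2 b1 b2).
  { rewrite !RInt2_minus, RInt2_scal by cont2_auto. reflexivity. }
  assert (Bd : Rabs (RInt2 (F (s0 + h)) a1 a2 b1 b2 - RInt2 (F s0) a1 a2 b1 b2 - h * RInt2 G a1 a2 b1 b2)
               <= (a2 - a1) * ((b2 - b1) * (e / (2 * A) * Rabs h))).
  { rewrite <- E. apply abs_RInt2_le_const; [cont2_auto|auto|auto|intros; apply Hrem; auto]. }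
  replace ((RInt2 (F (s0 + h)) a1 a2 b1 b2 - RInt2 (F s0) a1 a2 b1 b2) / h - RInt2 G a1 a2 b1 b2)
    with ((RInt2 (F (s0 + h)) a1 a2 b1 b2 - RInt2 (F s0) a1 a2 b1 b2 - h * RInt2 G a1 a2 b1 b2) / h)
    by (field; auto).
  unfold Rdiv. rewrite Rabs_mult, Rabs_inv.
  apply Rle_lt_trans with ((a2 - a1) * ((b2 - b1) * (e / (2 * A) * Rabs h)) * / Rabs h).
  { apply Rmult_le_compat_r; auto. left; apply Rinv_0_lt_compat; auto. }
  replace ((a2 - a1) * ((b2 - b1) * (e / (2 * A) * Rabs h)) * / Rabs h)
    with (e * ((A - 1) / (2 * A))).
  2:{ replace (A - 1) with ((a2 - a1) * (b2 - b1)) by (unfold A; ring). field; lra. }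
  apply Rlt_le_trans with (e * (1 / 2)); [|lra].
  apply Rmult_lt_compat_l; auto.
  apply Rmult_lt_reg_r with (2 * A); [lra|]. field_simplify; lra.
Qed.

Lemma is_derive_RInt2_quadratic (F : R -> R -> R -> R) (G : R -> R -> R) s0 a1 a2 b1 b2 C :
  a1 <= a2 -> b1 <= b2 -> (forall s, cont2 (F s)) -> cont2 G ->
  (forall h a b, Rabs (F (s0 + h) a b - F s0 a b - h * G a b) <= C * h ^ 2) ->
  is_derive (fun s => RInt2 (F s) a1 a2 b1 b2) s0 (RInt2 G a1 a2 b1 b2).
Proof.
  intros Ha Hb HF HG HC. apply is_derive_RInt2 with 1; auto; [lra|].
  intros e He. pose proof (Rabs_pos C).
  exists (e / (Rabs C + 1)). split; [apply Rdiv_lt_0_compat; lra|].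
  intros h _ Hh a b _ _. eapply Rle_trans; [apply HC|].
  rewrite <- (pow2_abs h). pose proof (Rabs_pos h).
  assert (Rabs C * Rabs h <= e).
  { apply Rle_trans with ((Rabs C + 1) * (e / (Rabs C + 1))); [|right; field; lra].
    apply Rmult_le_compat; lra. }
  assert (C <= Rabs C) by apply Rle_abs. nra.
Qed.

(** * Uniqueness and periodicity of the solution *)

(** A linear evolution equation whose right-hand side is bounded by [L] times the
    sup norm has only the zero solution: beyond the supremum [T] of the times up to
    which [Z] vanishes, on a step [h] with [L h <= 1/2] the mean value inequality
    gives [|Z| <= 2^-n] for every [n]. *)
Section ZeroSolution.
Variables (Z D : R -> R -> R -> R) (L : R).
Hypothesis HL : 0 <= L.
Hypothesis Hcont : forall t, 0 <= t -> forall e, 0 < e -> exists d, 0 < d /\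
  forall s, 0 <= s -> Rabs (s - t) < d -> forall x y, Rabs (Z x y s - Z x y t) <= e.
Hypothesis H0 : forall x y, Z x y 0 = 0.
Hypothesis Hder : forall t, 0 < t -> forall x y, is_derive (fun s => Z x y s) t (D x y t).
Hypothesis HD : forall t m, 0 <= t -> (forall x y, Rabs (Z x y t) <= m) ->
  forall x y, Rabs (D x y t) <= L * m.

Lemma zero_solution_step T : 0 <= T -> (forall x y, Z x y T = 0) ->
  exists h, 0 < h /\ forall s, T <= s <= T + h -> forall x y, Z x y s = 0.
Proof.
  intros HT HZ. destruct (Hcont T HT 1 ltac:(lra)) as [d [Hd Hd']].
  set (h := Rmin (d / 2) (1 / (2 * L + 2))).
  assert (Hh : 0 < h) by (unfold h; apply Rmin_pos; [lra|apply Rdiv_lt_0_compat; lra]).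
  assert (Hh1 : h <= d / 2) by apply Rmin_l.
  assert (Hh2 : L * h <= 1/2).
  { apply Rle_trans with (L * (1 / (2 * L + 2))).
    - apply Rmult_le_compat_l; auto. apply Rmin_r.
    - apply Rmult_le_reg_r with (2 * L + 2). lra. field_simplify; lra. }
  exists h; split; auto.
  assert (Hn : forall n s, T <= s <= T + h -> forall x y, Rabs (Z x y s) <= (1/2) ^ n).
  { induction n as [|n IH]; intros s Hs x y;
      rewrite <- (Rminus_0_r (Z x y s)), <- (HZ x y).
    - apply Hd'; [lra|]. rewrite Rabs_right; simpl; lra.
    - destruct (Req_dec s T) as [->|Hne].
      { rewrite Rminus_diag, Rabs_R0. apply pow_le. lra. }
      eapply Rle_trans.
      + apply (abs_increment_le_of_derive_abs_le (fun r => Z x y r) (fun r => D x y r) T s (L * (1/2)^n));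
          [lra| | |].
        * intros r Hr. apply Hder. lra.
        * intros r Hr e He. destruct (Hcont r ltac:(lra) (e/2) ltac:(lra)) as [d' [Hd1 Hd2]].
          exists d'; split; auto. intros s' Hs' Hs'd. eapply Rle_lt_trans; [apply Hd2; lra|lra].
        * intros r Hr. apply HD; [lra|]. intros; apply IH; lra.
      + simpl. assert (0 <= (1/2)^n) by (apply pow_le; lra).
        apply Rle_trans with ((L * h) * (1/2)^n); [|apply Rmult_le_compat_r; lra].
        replace (L * (1 / 2) ^ n * (s - T)) with ((L * (s - T)) * (1/2)^n) by ring.
        apply Rmult_le_compat_r; auto. apply Rmult_le_compat_l; lra. }
  intros s Hs x y. apply eq0_of_Rabs_le_half_pow. intros n. apply Hn; auto.
Qed.

Lemma zero_solution_unique t : 0 <= t -> forall x y, Z x y t = 0.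
Proof.
  intros Ht0 x0 y0. destruct (Req_dec (Z x0 y0 t) 0) as [|Hne]; auto. exfalso.
  set (E := fun r => 0 <= r /\ forall s, 0 <= s <= r -> forall x y, Z x y s = 0).
  assert (HE0 : E 0).
  { split; [lra|]. intros s Hs x y. replace s with 0 by lra. auto. }
  assert (HEb : bound E).
  { exists t. intros r [Hr Hr']. destruct (Rle_dec r t); auto.
    exfalso. apply Hne. apply Hr'. lra. }
  destruct (completeness E HEb (ex_intro _ 0 HE0)) as [T [HTub HTl]].
  assert (HT0 : 0 <= T) by (apply HTub, HE0).
  assert (Hbelow : forall s, 0 <= s < T -> forall x y, Z x y s = 0).
  { intros s Hs x y. destruct (classic (exists r, E r /\ s <= r)) as [[r [[_ Hr] Hsr]]|Hn].
    - apply Hr. lra.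
    - exfalso. enough (T <= s) by lra. apply HTl. intros r Hr. destruct (Rle_dec r s); auto.
      exfalso. apply Hn. exists r. split; auto. lra. }
  assert (HTz : forall x y, Z x y T = 0).
  { intros x y. destruct (Req_dec T 0) as [->|HTn]; auto.
    apply eq0_of_Rabs_le_all_pos. intros e He. destruct (Hcont T HT0 e He) as [d [Hd Hd']].
    set (s := Rmax 0 (T - d / 2)).
    assert (Hs1 : 0 <= s < T) by (unfold s, Rmax; destruct Rle_dec; lra).
    assert (Hs2 : Rabs (s - T) < d) by (unfold s, Rmax; destruct Rle_dec; rewrite Rabs_left; lra).
    specialize (Hd' s (proj1 Hs1) Hs2 x y). rewrite (Hbelow s Hs1) in Hd'.
    rewrite Rminus_0_l, Rabs_Ropp in Hd'. auto. }
  destruct (zero_solution_step T HT0 HTz) as [h [Hh Hh']].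
  enough (T + h <= T) by lra.
  apply HTub. split; [lra|]. intros s Hs x y.
  destruct (Rlt_dec s T); [apply Hbelow|apply Hh']; lra.
Qed.
End ZeroSolution.

Lemma rhs_abs_le eps u v W x y t m B : 0 < eps ->
  (forall a b, Rabs (W a b t) <= m) ->
  (forall a b, Rabs (u a b t) <= B /\ Rabs (v a b t) <= B) ->
  Rabs (rhs eps u v W x y t) <= 6 * B / eps * m.
Proof.
  intros He HW Hu.
  assert (T : forall a b c, 0 <= c <= B -> Rabs (W a b t * c) <= m * B).
  { intros a b c Hc. rewrite Rabs_mult, (Rabs_right c) by lra.
    apply Rmult_le_compat; auto using Rabs_pos; lra. }
  assert (Hpn : forall a b, 0 <= Defs.pos (u a b t) <= B /\ 0 <= Defs.neg (u a b t) <= B /\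
                            0 <= Defs.pos (v a b t) <= B /\ 0 <= Defs.neg (v a b t) <= B /\
                            0 <= Rabs (u a b t) <= B /\ 0 <= Rabs (v a b t) <= B).
  { intros a b. destruct (Hu a b).
    pose proof (pos_bounds (u a b t)); pose proof (neg_bounds (u a b t)).
    pose proof (pos_bounds (v a b t)); pose proof (neg_bounds (v a b t)).
    pose proof (Rabs_pos (u a b t)); pose proof (Rabs_pos (v a b t)). lra. }
  unfold rhs. rewrite Rabs_mult, Rabs_inv, (Rabs_right eps) by lra.
  replace (6 * B / eps * m) with (/ eps * (6 * (m * B))) by (field; lra).
  apply Rmult_le_compat_l; [left; apply Rinv_0_lt_compat; lra|].
  pose proof (T (x - eps) y _ (proj1 (Hpn (x - eps) y))).
  pose proof (T x y _ (proj1 (proj2 (proj2 (proj2 (proj2 (Hpn x y))))))).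
  pose proof (T (x + eps) y _ (proj1 (proj2 (Hpn (x + eps) y)))).
  pose proof (T x (y - eps) _ (proj1 (proj2 (proj2 (Hpn x (y - eps)))))).
  pose proof (T x y _ (proj2 (proj2 (proj2 (proj2 (proj2 (Hpn x y))))))).
  pose proof (T x (y + eps) _ (proj1 (proj2 (proj2 (proj2 (Hpn x (y + eps))))))).
  unfold Rabs in *; repeat destruct Rcase_abs; lra.
Qed.

Lemma rhs_minus eps u v X1 X2 x y t :
  rhs eps u v (fun a b s => X1 a b s - X2 a b s) x y t = rhs eps u v X1 x y t - rhs eps u v X2 x y t.
Proof. unfold rhs. ring. Qed.

Lemma rhs_shift eps u v X p q x y t :
  (forall a b, u (a + p) (b + q) t = u a b t /\ v (a + p) (b + q) t = v a b t) ->
  rhs eps u v (fun a b s => X (a + p) (b + q) s) x y t = rhs eps u v X (x + p) (y + q) t.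
Proof.
  intros Hper. unfold rhs.
  replace (x + p - eps) with (x - eps + p) by ring. replace (x + p + eps) with (x + eps + p) by ring.
  replace (y + q - eps) with (y - eps + q) by ring. replace (y + q + eps) with (y + eps + q) by ring.
  rewrite (proj1 (Hper (x - eps) y)), (proj1 (Hper (x + eps) y)), (proj1 (Hper x y)),
    (proj2 (Hper x (y - eps))), (proj2 (Hper x (y + eps))), (proj2 (Hper x y)).
  reflexivity.
Qed.

(** The solution inherits every translation invariance [(p, q)] of the data, since
    the difference of the solution and its translate solves the equation with zero
    initial value. *)
Lemma solution_shift_invariant eps u v X r0 B p q : 0 < eps ->
  is_C1_solution eps u v X r0 ->
  (forall x y t, 0 <= t -> Rabs (u x y t) <= B /\ Rabs (v x y t) <= B) ->
  (forall x y t, 0 <= t -> u (x + p) (y + q) t = u x y t /\ v (x + p) (y + q) t = v x y t) ->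
  (forall x y, r0 (x + p) (y + q) = r0 x y) ->
  forall t, 0 <= t -> forall x y, X (x + p) (y + q) t = X x y t.
Proof.
  intros Heps [[_ Hc] [Hi [Hd _]]] HB Hper Hr0.
  set (Z := fun x y t => X (x + p) (y + q) t - X x y t).
  assert (HB0 : 0 <= B) by (destruct (HB 0 0 0 ltac:(lra)); pose proof (Rabs_pos (u 0 0 0)); lra).
  intros t Ht x y. enough (Z x y t = 0) by (unfold Z in *; lra).
  apply (zero_solution_unique Z (rhs eps u v Z) (6 * B / eps)); auto.
  - unfold Rdiv. apply Rmult_le_pos; [lra|left; apply Rinv_0_lt_compat; lra].
  - intros t0 Ht0 e He. destruct (Hc t0 Ht0 (e/2) ltac:(lra)) as [d [Hd0 Hd']].
    exists d; split; auto. intros s Hs Hsd x0 y0. unfold Z.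
    specialize (Hd' s Hs Hsd). pose proof (Hd' (x0 + p) (y0 + q)). pose proof (Hd' x0 y0).
    unfold Rabs in *; repeat destruct Rcase_abs; lra.
  - intros x0 y0. unfold Z. rewrite !Hi, Hr0. ring.
  - intros t0 Ht0 x0 y0. unfold Z at 2.
    rewrite rhs_minus, rhs_shift by (intros; apply Hper; lra).
    apply (is_derive_minus (fun s => X (x0 + p) (y0 + q) s) (fun s => X x0 y0 s));
      apply has_Cb_deriv_is_derive; auto; apply Hd; lra.
  - intros t0 m Ht0 Hm x0 y0. apply rhs_abs_le; auto.
Qed.

Lemma solution_periodic eps u v X r0 B : 0 < eps ->
  is_C1_solution eps u v X r0 ->
  (forall x y t, 0 <= t -> Rabs (u x y t) <= B /\ Rabs (v x y t) <= B) ->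
  (forall t, 0 <= t -> periodic2 (fun x y => u x y t) /\ periodic2 (fun x y => v x y t)) ->
  periodic2 r0 ->
  forall t, 0 <= t -> periodic2 (fun x y => X x y t).
Proof.
  intros Heps HX HB Hper Hr0 t Ht x y.
  assert (Hshift : forall p q, (p = 2 * PI /\ q = 0) \/ (p = 0 /\ q = 2 * PI) ->
            X (x + p) (y + q) t = X x y t).
  { intros p q Hpq. apply (solution_shift_invariant eps u v X r0 B p q); auto.
    - intros a b s Hs. destruct (Hper s Hs) as [Pu Pv].
      destruct Hpq as [[-> ->]|[-> ->]]; rewrite Rplus_0_r;
        [split; [apply Pu|apply Pv]|split; [apply Pu|apply Pv]].
    - intros a b. destruct Hpq as [[-> ->]|[-> ->]]; rewrite Rplus_0_r; apply Hr0. }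
  split.
  - rewrite <- (Hshift (2 * PI) 0), Rplus_0_r; auto.
  - rewrite <- (Hshift 0 (2 * PI)), Rplus_0_r; auto.
Qed.

Section PeriodicIntegral.
Variable f : R -> R.
Hypothesis Hf : forall z, continuous f z.
Hypothesis Hp : forall z, f (z + 2 * PI) = f z.

Let Hex p q : ex_RInt f p q.
Proof. apply ex_RInt_continuous_R; auto. Qed.

Lemma RInt_period c : RInt f c (c + 2 * PI) = RInt f (- PI) PI :> R.
Proof.
  rewrite <- (RInt_Chasles_R f c PI (c + 2 * PI)) by auto.
  assert (E : RInt f PI (c + 2 * PI) = RInt f (- PI) c).
  { transitivity (RInt (fun z => f (z + 2 * PI)) (- PI) c).
    - rewrite RInt_shift_R by auto. f_equal; ring.
    - apply RInt_ext. intros; apply Hp. }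
  rewrite E, Rplus_comm. apply RInt_Chasles_R; auto.
Qed.

Lemma RInt_period_shift c : RInt (fun z => f (z + c)) (- PI) PI = RInt f (- PI) PI :> R.
Proof. rewrite RInt_shift_R by auto. rewrite <- (RInt_period (- PI + c)). f_equal. ring. Qed.

Lemma RInt_periods (n : nat) c : RInt f c (c + 2 * PI * INR n) = INR n * RInt f (- PI) PI :> R.
Proof.
  induction n as [|n IH].
  - simpl. rewrite Rmult_0_r, Rplus_0_r, RInt_point, Rmult_0_l. reflexivity.
  - rewrite S_INR, <- (RInt_Chasles_R f c (c + 2 * PI * INR n)), IH by auto.
    replace (c + 2 * PI * (INR n + 1)) with ((c + 2 * PI * INR n) + 2 * PI) by ring.
    rewrite RInt_period. ring.
Qed.

Lemma RInt_periodic_nonneg_le (n : nat) c w : (forall z, 0 <= f z) -> 0 <= w <= 2 * PI * INR n ->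
  RInt f c (c + w) <= INR n * RInt f (- PI) PI.
Proof.
  intros Hpos Hw.
  rewrite <- (RInt_periods n c), <- (RInt_Chasles_R f c (c + w) (c + 2 * PI * INR n)) by auto.
  enough (0 <= RInt f (c + w) (c + 2 * PI * INR n)) by lra.
  apply RInt_ge_0; auto; lra.
Qed.
End PeriodicIntegral.

Lemma int_cell_RInt2 F : int_cell F = RInt2 F (- PI) PI (- PI) PI.
Proof. reflexivity. Qed.

Section PeriodicCell.
Variable F : R -> R -> R.
Hypothesis HF : cont2 F.
Hypothesis HP : periodic2 F.

Lemma int_cell_shift_x c : int_cell (fun a b => F (a + c) b) = int_cell F.
Proof.
  unfold int_cell. apply (RInt_period_shift (fun a => RInt (fun b => F a b) (- PI) PI)).
  - intros z. apply continuous_RInt_param; auto.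
  - intros z. apply RInt_ext. intros. apply HP.
Qed.

Lemma int_cell_shift_y c : int_cell (fun a b => F a (b + c)) = int_cell F.
Proof.
  unfold int_cell. apply RInt_ext. intros a _.
  apply (RInt_period_shift (fun b => F a b)).
  - apply cont2_continuous_y; auto.
  - intros z. apply HP.
Qed.

(** A square of side at most [2 pi n] is covered by [n^2] period cells. *)
Lemma RInt2_periodic_nonneg_le (n : nat) c1 w1 c2 w2 : (forall a b, 0 <= F a b) ->
  0 <= w1 <= 2 * PI * INR n -> 0 <= w2 <= 2 * PI * INR n ->
  RInt2 F c1 (c1 + w1) c2 (c2 + w2) <= INR n * (INR n * int_cell F).
Proof.
  intros Hpos H1 H2. unfold RInt2, int_cell.
  set (H := fun a => RInt (fun b => F a b) (- PI) PI).
  assert (HHc : forall z, continuous H z) by (intros; apply continuous_RInt_param; auto).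
  assert (HHp : forall z, H (z + 2 * PI) = H z) by (intros; apply RInt_ext; intros; apply HP).
  assert (HHpos : forall z, 0 <= H z).
  { intros z. apply RInt_ge_0; [pose proof PI_RGT_0; lra|apply ex_RInt_y; auto|auto]. }
  apply Rle_trans with (RInt (fun a => INR n * H a) c1 (c1 + w1)).
  - apply RInt_le; [lra|apply ex_RInt_param; auto| |].
    + apply (ex_RInt_scal (V:=R_NormedModule)), ex_RInt_continuous_R; auto.
    + intros a _. apply RInt_periodic_nonneg_le; auto.
      * apply cont2_continuous_y; auto.
      * intros; apply HP.
  - rewrite RInt_scal_R by (apply ex_RInt_continuous_R; auto).
    apply Rmult_le_compat_l; [apply pos_INR|]. apply RInt_periodic_nonneg_le; auto.
Qed.
End PeriodicCell.

(** * A smooth approximation of the absolute value *)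

Section SmoothAbs.
Variable d : R.
Hypothesis Hd : 0 < d.

Definition sabs (s : R) := sqrt (s ^ 2 + d ^ 2).
Definition sabs' (s : R) := s / sqrt (s ^ 2 + d ^ 2).
Definition sabs'' (s : R) := / sqrt (s ^ 2 + d ^ 2) - s ^ 2 / (sqrt (s ^ 2 + d ^ 2) * (s ^ 2 + d ^ 2)).

Let sq_pos s : 0 < s ^ 2 + d ^ 2.
Proof. nra. Qed.

Let sqrt_sq_ge s : d <= sqrt (s ^ 2 + d ^ 2).
Proof. rewrite <- (sqrt_pow2 d) at 1 by lra. apply sqrt_le_1_alt. nra. Qed.

Let sqrt_sq_sqr s : sqrt (s ^ 2 + d ^ 2) * sqrt (s ^ 2 + d ^ 2) = s ^ 2 + d ^ 2.
Proof. apply sqrt_sqrt. nra. Qed.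

Lemma sabs_bounds s : Rabs s <= sabs s <= Rabs s + d.
Proof.
  unfold sabs. pose proof (Rabs_pos s). split.
  - rewrite <- sqrt_Rsqr_abs. apply sqrt_le_1_alt. unfold Rsqr. nra.
  - rewrite <- (sqrt_pow2 (Rabs s + d)) by lra.
    apply sqrt_le_1_alt. rewrite <- (pow2_abs s). nra.
Qed.

Lemma Rabs_sabs'_le_1 s : Rabs (sabs' s) <= 1.
Proof.
  unfold sabs'. pose proof (sqrt_sq_ge s). pose proof (proj1 (sabs_bounds s)). unfold sabs in *.
  unfold Rdiv. rewrite Rabs_mult, Rabs_inv, (Rabs_right (sqrt _)) by lra.
  apply Rmult_le_reg_r with (sqrt (s ^ 2 + d ^ 2)); [lra|].
  rewrite Rmult_assoc, Rinv_l by lra. lra.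
Qed.

Lemma sabs'_mul_ge s : Rabs s - d <= sabs' s * s.
Proof.
  unfold sabs'. pose proof (sqrt_sq_ge s). pose proof (proj2 (sabs_bounds s)). unfold sabs in *.
  replace (s / sqrt (s ^ 2 + d ^ 2) * s) with (s ^ 2 / sqrt (s ^ 2 + d ^ 2)) by (field; lra).
  apply Rmult_le_reg_r with (sqrt (s ^ 2 + d ^ 2)); [lra|].
  unfold Rdiv. rewrite Rmult_assoc, Rinv_l, Rmult_1_r by lra.
  destruct (Rle_dec (Rabs s) d).
  - pose proof (pow2_ge_0 s). nra.
  - apply Rle_trans with ((Rabs s - d) * (Rabs s + d)).
    + apply Rmult_le_compat_l; lra.
    + rewrite <- (pow2_abs s). nra.
Qed.

Lemma is_derive_sabs s : is_derive sabs s (sabs' s).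
Proof.
  unfold sabs, sabs'. pose proof (sq_pos s). pose proof (sqrt_sq_ge s).
  auto_derive; replace (s * (s * 1) + d * (d * 1)) with (s ^ 2 + d ^ 2) by ring; [lra|].
  field. lra.
Qed.

Lemma is_derive_sabs' s : is_derive sabs' s (sabs'' s).
Proof.
  unfold sabs', sabs''. pose proof (sq_pos s). pose proof (sqrt_sq_ge s).
  pose proof (sqrt_sq_sqr s).
  auto_derive; replace (s * (s * 1) + d * (d * 1)) with (s ^ 2 + d ^ 2) by ring.
  - repeat split; lra.
  - set (S := sqrt (s ^ 2 + d ^ 2)) in *. rewrite H1. field. split; lra.
Qed.

Lemma Rabs_sabs''_le s : Rabs (sabs'' s) <= / d.
Proof.
  unfold sabs''. pose proof (sqrt_sq_ge s). pose proof (sq_pos s). pose proof (sqrt_sq_sqr s).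
  set (S := sqrt (s ^ 2 + d ^ 2)) in *.
  replace (/ S - s ^ 2 / (S * (s ^ 2 + d ^ 2))) with (d ^ 2 / (S * (s ^ 2 + d ^ 2)))
    by (field; split; lra).
  rewrite Rabs_right.
  2:{ apply Rle_ge, Rmult_le_pos; [nra|left; apply Rinv_0_lt_compat; nra]. }
  rewrite <- H1. apply Rle_trans with (d ^ 2 / (d * (d * d))); [|right; field; lra].
  unfold Rdiv. apply Rmult_le_compat_l; [nra|]. apply Rinv_le_contravar.
  - apply Rmult_lt_0_compat; [lra|apply Rmult_lt_0_compat; lra].
  - apply Rmult_le_compat; nra.
Qed.

Lemma continuous_sabs s : continuous sabs s.
Proof. apply (ex_derive_continuous (K:=R_AbsRing) (V:=R_NormedModule)). eexists. apply is_derive_sabs. Qed.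

Lemma continuous_sabs' s : continuous sabs' s.
Proof. apply (ex_derive_continuous (K:=R_AbsRing) (V:=R_NormedModule)). eexists. apply is_derive_sabs'. Qed.

Lemma sabs_lipschitz a b : Rabs (sabs b - sabs a) <= Rabs (b - a).
Proof.
  rewrite <- (Rmult_1_l (Rabs (b - a))).
  apply (abs_increment_le sabs sabs'); [apply is_derive_sabs|intros; apply Rabs_sabs'_le_1].
Qed.

Lemma sabs_taylor a b : Rabs (sabs b - sabs a - sabs' a * (b - a)) <= / d * (b - a) ^ 2.
Proof.
  replace b with (a + (b - a)) at 1 by ring. rewrite (Rmult_comm (sabs' a)).
  apply taylor_remainder_le; [apply is_derive_sabs|].
  intros x y. apply (abs_increment_le sabs' sabs''); [apply is_derive_sabs'|intros; apply Rabs_sabs''_le].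
Qed.
End SmoothAbs.

#[export] Hint Resolve continuous_sabs continuous_sabs' : cont2.

(** * Contraction of the L1 norm on the period cell *)

Lemma abs_int_cell_le_const F M : cont2 F -> (forall a b, Rabs (F a b) <= M) ->
  Rabs (int_cell F) <= (2 * PI) ^ 2 * M.
Proof.
  intros HF H. pose proof PI_RGT_0. rewrite int_cell_RInt2.
  replace ((2 * PI) ^ 2 * M) with ((PI - - PI) * ((PI - - PI) * M)) by ring.
  apply abs_RInt2_le_const; auto; lra.
Qed.

Lemma periodic2_abs_mul (f g : R -> R -> R) (k : R -> R) : periodic2 f -> periodic2 g ->
  periodic2 (fun a b => Rabs (f a b) * k (g a b)).
Proof.
  intros Hf Hg a b. destruct (Hf a b) as [-> ->]. destruct (Hg a b) as [-> ->]. auto.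
Qed.

(** [s] plays the role of the sign of [X0]: against the incoming terms
    [s X <= |X|], and on the outgoing ones [s X0 >= |X0| - d]. *)
Lemma mul_upwind_le s X0 Xm Xp Ym Yp um u0 up vm v0 vp d B e :
  0 < e -> Rabs s <= 1 -> Rabs X0 - d <= s * X0 -> Rabs u0 <= B -> Rabs v0 <= B -> 0 <= d ->
  s * (/ e * (Xm * Defs.pos um - X0 * Rabs u0 + Xp * Defs.neg up
              + Ym * Defs.pos vm - X0 * Rabs v0 + Yp * Defs.neg vp))
  <= / e * ((Rabs Xm * Defs.pos um - Rabs X0 * Defs.pos u0) + (Rabs Xp * Defs.neg up - Rabs X0 * Defs.neg u0)
          + (Rabs Ym * Defs.pos vm - Rabs X0 * Defs.pos v0) + (Rabs Yp * Defs.neg vp - Rabs X0 * Defs.neg v0)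
          + 2 * d * B).
Proof.
  intros He Hs HX Hu Hv Hd.
  rewrite <- Rmult_assoc, (Rmult_comm s), Rmult_assoc.
  apply Rmult_le_compat_l; [left; apply Rinv_0_lt_compat; auto|].
  assert (Kin : forall z w, 0 <= w -> s * (z * w) <= Rabs z * w).
  { intros z w Hw. rewrite <- Rmult_assoc. apply Rmult_le_compat_r; auto.
    eapply Rle_trans; [apply Rle_abs|]. rewrite Rabs_mult.
    rewrite <- (Rmult_1_l (Rabs z)) at 2. apply Rmult_le_compat_r; auto using Rabs_pos. }
  assert (Kout : forall w, 0 <= w <= B -> - (s * (X0 * w)) <= - (Rabs X0 * w) + d * B).
  { intros w Hw. rewrite <- Rmult_assoc.
    assert (- (s * X0 * w) <= - ((Rabs X0 - d) * w))
      by (apply Ropp_le_contravar, Rmult_le_compat_r; lra).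
    assert (d * w <= d * B) by (apply Rmult_le_compat_l; lra). lra. }
  pose proof (Kin Xm _ (proj1 (pos_bounds um))). pose proof (Kin Xp _ (proj1 (neg_bounds up))).
  pose proof (Kin Ym _ (proj1 (pos_bounds vm))). pose proof (Kin Yp _ (proj1 (neg_bounds vp))).
  pose proof (Rabs_pos_neg u0); pose proof (Rabs_pos_neg v0).
  pose proof (pos_bounds u0); pose proof (neg_bounds u0); pose proof (pos_bounds v0); pose proof (neg_bounds v0).
  pose proof (Kout (Defs.pos u0 + Defs.neg u0) ltac:(lra)).
  pose proof (Kout (Defs.pos v0 + Defs.neg v0) ltac:(lra)).
  rewrite (Rabs_pos_neg u0), (Rabs_pos_neg v0). nra.
Qed.

Lemma sabs_chain_remainder d X0 X1 R0 h e1 BR : 0 < d -> h <> 0 -> e1 <= 1 -> Rabs R0 <= BR ->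
  Rabs ((X1 - X0) / h - R0) <= e1 ->
  Rabs (sabs d X1 - sabs d X0 - h * (sabs' d X0 * R0)) <= / d * (Rabs h * (BR + 1)) ^ 2 + e1 * Rabs h.
Proof.
  intros Hd Hh He1 HR H1.
  assert (H2 : Rabs (X1 - X0 - h * R0) <= e1 * Rabs h).
  { replace (X1 - X0 - h * R0) with (h * ((X1 - X0) / h - R0)) by (field; auto).
    rewrite Rabs_mult, Rmult_comm. apply Rmult_le_compat_r; auto using Rabs_pos. }
  assert (H3 : Rabs (X1 - X0) <= Rabs h * (BR + 1)).
  { replace (X1 - X0) with ((X1 - X0 - h * R0) + h * R0) by ring.
    eapply Rle_trans; [apply Rabs_triang|]. rewrite Rabs_mult.
    pose proof (Rabs_pos h).
    assert (Rabs h * Rabs R0 <= Rabs h * BR) by (apply Rmult_le_compat_l; auto). nra. }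
  assert (H4 : / d * (X1 - X0) ^ 2 <= / d * (Rabs h * (BR + 1)) ^ 2).
  { apply Rmult_le_compat_l; [left; apply Rinv_0_lt_compat; auto|].
    rewrite <- (pow2_abs (X1 - X0)). apply pow_incr. split; auto using Rabs_pos. }
  assert (H5 : Rabs (sabs' d X0 * (X1 - X0 - h * R0)) <= e1 * Rabs h).
  { rewrite Rabs_mult. pose proof (Rabs_sabs'_le_1 d Hd X0). pose proof (Rabs_pos (sabs' d X0)).
    pose proof (Rabs_pos (X1 - X0 - h * R0)). pose proof (Rabs_pos h). nra. }
  pose proof (sabs_taylor d Hd X0 X1).
  replace (sabs d X1 - sabs d X0 - h * (sabs' d X0 * R0)) with
    ((sabs d X1 - sabs d X0 - sabs' d X0 * (X1 - X0)) + sabs' d X0 * (X1 - X0 - h * R0)) by ring.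
  eapply Rle_trans; [apply Rabs_triang|]. lra.
Qed.

Section L1Contraction.
Variables (eps : R) (u v X : R -> R -> R -> R) (r0 : R -> R -> R) (B : R).
Hypothesis Heps : 0 < eps.
Hypothesis HX : is_C1_solution eps u v X r0.
Hypothesis HB : forall x y t, 0 <= t -> Rabs (u x y t) <= B /\ Rabs (v x y t) <= B.
Hypothesis Huv : cont_Cb u /\ cont_Cb v.
Hypothesis Huv_per : forall t, 0 <= t -> periodic2 (fun x y => u x y t) /\ periodic2 (fun x y => v x y t).
Hypothesis HX_per : forall t, 0 <= t -> periodic2 (fun x y => X x y t).
Hypothesis Hr0 : Cb r0.

Let cont2_X t : 0 <= t -> cont2 (fun x y => X x y t).
Proof. intros Ht. destruct HX as [[H _] _]. apply Cb_cont2, H, Ht. Qed.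
Let cont2_rhs t : 0 <= t -> cont2 (fun x y => rhs eps u v X x y t).
Proof. intros Ht. destruct HX as [_ [_ [_ [H _]]]]. apply Cb_cont2, H, Ht. Qed.
Let cont2_u t : 0 <= t -> cont2 (fun x y => u x y t).
Proof. intros Ht. destruct Huv as [[H _] _]. apply Cb_cont2, H, Ht. Qed.
Let cont2_v t : 0 <= t -> cont2 (fun x y => v x y t).
Proof. intros Ht. destruct Huv as [_ [H _]]. apply Cb_cont2, H, Ht. Qed.

Definition cell_sabs d t := int_cell (fun x y => sabs d (X x y t)).
Definition cell_sabs_rate d t :=
  int_cell (fun x y => sabs' d (X x y t) * rhs eps u v X x y t).

(** The transport terms integrate to zero over the cell by periodicity, leaving
    only the error [2 d B / eps] of the smoothing. *)
Lemma cell_sabs_rate_le d t : 0 < d -> 0 <= t -> cell_sabs_rate d t <= / eps * ((2 * PI) ^ 2 * (2 * d * B)).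
Proof.
  intros Hd Ht. pose proof (cont2_X t Ht). pose proof (cont2_u t Ht). pose proof (cont2_v t Ht).
  pose proof (cont2_rhs t Ht). pose proof PI_RGT_0.
  destruct (Huv_per t Ht) as [Pu Pv]. pose proof (HX_per t Ht) as PX.
  set (P := fun a b => Rabs (X a b t) * Defs.pos (u a b t)).
  set (N := fun a b => Rabs (X a b t) * Defs.neg (u a b t)).
  set (Q := fun a b => Rabs (X a b t) * Defs.pos (v a b t)).
  set (S := fun a b => Rabs (X a b t) * Defs.neg (v a b t)).
  assert (cP : cont2 P) by (unfold P; cont2_auto). assert (cN : cont2 N) by (unfold N; cont2_auto).
  assert (cQ : cont2 Q) by (unfold Q; cont2_auto). assert (cS : cont2 S) by (unfold S; cont2_auto).
  set (W := fun a b => / eps * ((P (a + - eps) b - P a b) + (N (a + eps) b - N a b)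
                + (Q a (b + - eps) - Q a b) + (S a (b + eps) - S a b) + 2 * d * B)).
  apply Rle_trans with (int_cell W).
  - unfold cell_sabs_rate. rewrite !int_cell_RInt2.
    apply RInt2_le; [cont2_auto|unfold W; cont2_auto|lra|lra|].
    intros a b _ _. unfold W, P, N, Q, S, rhs.
    replace (a + - eps) with (a - eps) by ring. replace (b + - eps) with (b - eps) by ring.
    apply mul_upwind_le; auto; try lra.
    + apply Rabs_sabs'_le_1; auto.
    + apply sabs'_mul_ge; auto.
    + apply HB; auto.
    + apply HB; auto.
  - unfold W. rewrite int_cell_RInt2, RInt2_scal, RInt2_plus, RInt2_const by cont2_auto.
    rewrite !RInt2_plus, !RInt2_minus by cont2_auto. rewrite <- !int_cell_RInt2.
    rewrite (int_cell_shift_x P), (int_cell_shift_x N), (int_cell_shift_y Q), (int_cell_shift_y S);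
      auto; [right; ring|..];
      apply (periodic2_abs_mul (fun a b => X a b t)); auto.
Qed.

Lemma is_derive_cell_sabs d t : 0 < d -> 0 < t -> is_derive (cell_sabs d) t (cell_sabs_rate d t).
Proof.
  intros Hd Ht. pose proof PI_RGT_0.
  pose proof (cont2_X t (Rlt_le _ _ Ht)). pose proof (cont2_rhs t (Rlt_le _ _ Ht)).
  destruct HX as [_ [_ [Hder [HRc _]]]].
  destruct (HRc t (Rlt_le _ _ Ht)) as [_ [BR HBR]].
  unfold cell_sabs, cell_sabs_rate, int_cell.
  apply (is_derive_RInt2 (fun s a b => sabs d (X a b s))) with t; try lra; [| |].
  - intros s Hs. apply Rabs_lt_between' in Hs.
    pose proof (cont2_X s ltac:(lra)). cont2_auto.
  - cont2_auto.
  - intros e He. set (e1 := Rmin 1 (e / 2)).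
    assert (He1 : 0 < e1) by (apply Rmin_pos; lra).
    destruct (Hder t (Rlt_le _ _ Ht) e1 He1) as [d1 [Hd1 Hd1']].
    set (d2 := e * d / (2 * (BR + 1) ^ 2 + 1)).
    assert (Hd2 : 0 < d2) by (apply Rdiv_lt_0_compat; [nra|pose proof (pow2_ge_0 (BR + 1)); lra]).
    exists (Rmin d1 (Rmin t d2)). split; [apply Rmin_pos; [lra|apply Rmin_pos; lra]|].
    intros h Hh0 Hh a b _ _.
    assert (Hh1 : Rabs h < d1) by (eapply Rlt_le_trans; [exact Hh|apply Rmin_l]).
    assert (Hh2 : Rabs h < t) by (eapply Rlt_le_trans; [exact Hh|]; eapply Rle_trans; [apply Rmin_r|apply Rmin_l]).
    assert (Hh3 : Rabs h < d2) by (eapply Rlt_le_trans; [exact Hh|]; eapply Rle_trans; [apply Rmin_r|apply Rmin_r]).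
    assert (Hth : 0 <= t + h) by (apply Rabs_lt_between in Hh2; lra).
    eapply Rle_trans.
    { apply (sabs_chain_remainder d _ _ _ h e1 BR); [exact Hd|exact Hh0|apply Rmin_l|apply HBR|apply Hd1'; auto]. }
    assert (HhA : 0 < Rabs h) by (apply Rabs_pos_lt; auto).
    assert (Hq : / d * (BR + 1) ^ 2 * Rabs h <= e / 2).
    { apply Rle_trans with (/ d * (BR + 1) ^ 2 * d2).
      - apply Rmult_le_compat_l; [|lra]. apply Rmult_le_pos; [left; apply Rinv_0_lt_compat; lra|apply pow2_ge_0].
      - pose proof (pow2_ge_0 (BR + 1)).
        replace (/ d * (BR + 1) ^ 2 * d2) with (e / 2 * (2 * (BR + 1) ^ 2 / (2 * (BR + 1) ^ 2 + 1)))
          by (unfold d2; field; lra).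
        rewrite <- (Rmult_1_r (e / 2)) at 2. apply Rmult_le_compat_l; [lra|].
        apply Rmult_le_reg_r with (2 * (BR + 1) ^ 2 + 1); [lra|].
        unfold Rdiv. rewrite Rmult_assoc, Rinv_l; lra. }
    assert (e1 <= e / 2) by apply Rmin_r.
    replace (/ d * (Rabs h * (BR + 1)) ^ 2) with ((/ d * (BR + 1) ^ 2 * Rabs h) * Rabs h) by ring.
    nra.
Qed.

Lemma cell_sabs_continuous d t : 0 < d -> 0 <= t -> forall e, 0 < e -> exists dd, 0 < dd /\
  forall s, 0 <= s -> Rabs (s - t) < dd -> Rabs (cell_sabs d s - cell_sabs d t) < e.
Proof.
  intros Hd Ht e He. pose proof PI_RGT_0.
  assert (Hc : 0 < (2 * PI) ^ 2) by (apply pow_lt; lra).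
  destruct HX as [[_ HXcont] _].
  destruct (HXcont t Ht (e / (2 * (2 * PI) ^ 2))) as [dd [Hdd H']]; [apply Rdiv_lt_0_compat; lra|].
  exists dd; split; auto. intros s Hs Hsd.
  pose proof (cont2_X t Ht). pose proof (cont2_X s Hs).
  unfold cell_sabs. rewrite !int_cell_RInt2, <- RInt2_minus, <- int_cell_RInt2 by cont2_auto.
  eapply Rle_lt_trans; [apply abs_int_cell_le_const with (M := e / (2 * (2 * PI) ^ 2)); [cont2_auto|]|].
  - intros a b. eapply Rle_trans; [apply sabs_lipschitz|apply H']; auto.
  - replace ((2 * PI) ^ 2 * (e / (2 * (2 * PI) ^ 2))) with (e / 2) by (field; lra). lra.
Qed.

Lemma cell_sabs_increment_le d t : 0 < d -> 0 <= t ->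
  cell_sabs d t - cell_sabs d 0 <= / eps * ((2 * PI) ^ 2 * (2 * d * B)) * (t - 0).
Proof.
  intros Hd Ht. destruct (Req_dec t 0) as [->|Hn]; [rewrite !Rminus_diag; lra|].
  apply (increment_le_of_derive_le _ (cell_sabs_rate d)); [lra| | |].
  - intros s Hs. apply is_derive_cell_sabs; lra.
  - intros s Hs e He. destruct (cell_sabs_continuous d s Hd ltac:(lra) e He) as [dd [H1 H2]].
    exists dd; split; auto. intros s' Hs' Hsd. apply H2; auto; lra.
  - intros s Hs. apply cell_sabs_rate_le; lra.
Qed.

(** Letting the smoothing parameter [d] go to zero in
    [cell_sabs d t <= cell_sabs d 0 + O(d)] gives the L1 contraction. *)
Lemma solution_L1_le t : 0 <= t ->
  int_cell (fun x y => Rabs (X x y t)) <= int_cell (fun x y => Rabs (r0 x y)).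
Proof.
  intros Ht. pose proof PI_RGT_0.
  assert (cr0 : cont2 r0) by (apply Cb_cont2; auto).
  pose proof (cont2_X t Ht).
  apply le_of_le_plus_mul with (k := (2 * PI) ^ 2 + / eps * ((2 * PI) ^ 2 * (2 * B)) * t).
  intros dl Hdl.
  assert (Hlow : int_cell (fun x y => Rabs (X x y t)) <= cell_sabs dl t).
  { unfold cell_sabs. rewrite !int_cell_RInt2.
    apply RInt2_le; try cont2_auto; try lra. intros a b _ _. apply sabs_bounds; auto. }
  pose proof (cell_sabs_increment_le dl t Hdl Ht).
  assert (Hinit : cell_sabs dl 0 <= int_cell (fun x y => Rabs (r0 x y)) + (2 * PI) ^ 2 * dl).
  { unfold cell_sabs. destruct HX as [_ [Hi _]].
    rewrite int_cell_RInt2, (RInt2_ext _ (fun x y => sabs dl (r0 x y))) by (intros; rewrite Hi; auto).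
    apply Rle_trans with (RInt2 (fun x y => Rabs (r0 x y) + dl) (- PI) PI (- PI) PI).
    - apply RInt2_le; try cont2_auto; try lra. intros a b _ _. apply sabs_bounds; auto.
    - rewrite RInt2_plus, RInt2_const, <- int_cell_RInt2 by cont2_auto. right; ring. }
  replace (/ eps * ((2 * PI) ^ 2 * (2 * dl * B)) * (t - 0))
    with (dl * (/ eps * ((2 * PI) ^ 2 * (2 * B)) * t)) in * by (field; lra).
  lra.
Qed.
End L1Contraction.

(** * Convolution with the rescaled mollifier *)

Definition supported_in (f : R -> R -> R) (K : R) :=
  forall a b, K < Rabs a \/ K < Rabs b -> f a b = 0.

Lemma supported_in_Rabs f K : supported_in f K -> supported_in f (Rabs K).
Proof. intros H a b Hab. apply H. pose proof (Rle_abs K). lra. Qed.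

Lemma cont2_bounded_on_square f K : cont2 f -> 0 <= K ->
  exists M, forall a b, -K <= a <= K -> -K <= b <= K -> Rabs (f a b) <= M.
Proof.
  intros Hf HK.
  assert (Hmax : forall a, exists bm, (forall b, -K <= b <= K -> Rabs (f a b) <= Rabs (f a bm)) /\ -K <= bm <= K).
  { intros a. destruct (continuity_ab_maj (fun b => Rabs (f a b)) (-K) K) as [bm [H1 H2]]; [lra| |].
    - intros c0 _. apply continuity_pt_filterlim, continuous_Rabs_comp, cont2_continuous_y; auto.
    - exists bm; split; auto. }
  destruct (choice _ Hmax) as [bm Hbm].
  set (g := fun a => Rabs (f a (bm a))).
  assert (Hg : forall a, -K <= a <= K -> continuity_pt g a).
  { intros a Ha. apply continuity_pt_filterlim, continuous_of_eps_delta. intros e He.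
    destruct (uniform_continuity_2d f (-K - 1) (K + 1) (-K) K) with (eps := mkposreal e He) as [d Hd].
    { intros; apply cont2_continuity_2d_pt; auto. }
    exists (Rmin d 1). split; [apply Rmin_pos; [apply cond_pos|lra]|].
    intros y Hy. simpl in Hd.
    assert (H1 : Rabs (y - a) < d) by (eapply Rlt_le_trans; [exact Hy|apply Rmin_l]).
    assert (H2 : Rabs (y - a) < 1) by (eapply Rlt_le_trans; [exact Hy|apply Rmin_r]).
    apply Rabs_lt_between' in H2.
    destruct (Hbm a) as [Ha1 Ha2]. destruct (Hbm y) as [Hy1 Hy2].
    assert (E1 : Rabs (f y (bm a) - f a (bm a)) < e)
      by (apply Hd; try lra; rewrite Rminus_diag, Rabs_R0; apply cond_pos).
    assert (E2 : Rabs (f y (bm y) - f a (bm y)) < e)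
      by (apply Hd; try lra; rewrite Rminus_diag, Rabs_R0; apply cond_pos).
    pose proof (Ha1 (bm y) Hy2). pose proof (Hy1 (bm a) Ha2).
    pose proof (Rabs_triang_inv (f y (bm y)) (f a (bm y))).
    pose proof (Rabs_triang_inv (f a (bm a)) (f y (bm a))).
    rewrite (Rabs_minus_sym (f a (bm a))) in *.
    unfold g. apply Rabs_lt_between'. split; lra. }
  destruct (continuity_ab_maj g (-K) K) as [am [Ham1 Ham2]]; [lra|auto|].
  exists (g am). intros a b Ha Hb. eapply Rle_trans; [apply (proj1 (Hbm a)); auto|]. apply Ham1; auto.
Qed.

Lemma cont2_supported_bounded f K : cont2 f -> supported_in f K ->
  exists M, 0 <= M /\ forall a b, Rabs (f a b) <= M.
Proof.
  intros Hf Hs. destruct (cont2_bounded_on_square f (Rabs K) Hf (Rabs_pos K)) as [M HM].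
  exists (Rmax M 0). split; [apply Rmax_r|]. intros a b.
  destruct (Rle_dec (Rabs a) K) as [Ha|Ha]; destruct (Rle_dec (Rabs b) K) as [Hb|Hb];
    try (rewrite Hs by lra; rewrite Rabs_R0; apply Rmax_r).
  eapply Rle_trans; [|apply Rmax_l]. pose proof (Rle_abs K).
  apply HM; apply Rabs_le_between; lra.
Qed.

Lemma supported_in_dx f K : 0 <= K -> supported_in f K -> supported_in (dx f) K.
Proof.
  intros HK Hs a b Hab. unfold dx.
  destruct (Rlt_dec K (Rabs b)) as [Hb|Hb].
  - rewrite (Derive_ext _ (fun _ => 0)) by (intros; apply Hs; auto). apply Derive_const.
  - destruct Hab as [Ha|Hb']; [|contradiction].
    rewrite (Derive_ext_loc _ (fun _ => 0)); [apply Derive_const|].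
    assert (Hr : 0 < Rabs a - K) by lra.
    exists (mkposreal _ Hr). intros y Hy. change R in y. apply Hs. left.
    change (Rabs (y - a) < Rabs a - K) in Hy.
    pose proof (Rabs_triang_inv a (a - y)). replace (a - (a - y)) with y in H by ring.
    rewrite Rabs_minus_sym in Hy. lra.
Qed.

Lemma supported_in_dy f K : 0 <= K -> supported_in f K -> supported_in (dy f) K.
Proof.
  intros HK Hs a b Hab. unfold dy.
  destruct (Rlt_dec K (Rabs a)) as [Ha|Ha].
  - rewrite (Derive_ext _ (fun _ => 0)) by (intros; apply Hs; auto). apply Derive_const.
  - destruct Hab as [Ha'|Hb]; [contradiction|].
    rewrite (Derive_ext_loc _ (fun _ => 0)); [apply Derive_const|].
    assert (Hr : 0 < Rabs b - K) by lra.
    exists (mkposreal _ Hr). intros y Hy. change R in y. apply Hs. right.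
    change (Rabs (y - b) < Rabs b - K) in Hy.
    pose proof (Rabs_triang_inv b (b - y)). replace (b - (b - y)) with y in H by ring.
    rewrite Rabs_minus_sym in Hy. lra.
Qed.

Lemma moll_supported phi K d : supported_in phi K -> 0 < d ->
  supported_in (moll phi d) ((Rabs K + 1) * d).
Proof.
  intros Hs Hd a b H. unfold moll. rewrite Hs; [ring|].
  assert (Hk : forall z, (Rabs K + 1) * d < Rabs z -> K < Rabs (z / d)).
  { intros z Hz. unfold Rdiv. rewrite Rabs_mult, Rabs_inv, (Rabs_right d) by lra.
    apply Rmult_lt_reg_r with d; auto. rewrite Rmult_assoc, Rinv_l, Rmult_1_r by lra.
    pose proof (Rle_abs K). nra. }
  destruct H; [left|right]; apply Hk; auto.
Qed.

(** The centre [(c, e)] may move with the point, which is what makes this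
    representation usable for differentiating in [x] or [y]. *)
Lemma conv2_moll_RInt2 phi K d Xt x y c e : cont2 phi -> supported_in phi K -> 0 < d -> cont2 Xt ->
  Rabs (x - c) <= 1 -> Rabs (y - e) <= 1 ->
  let W := (Rabs K + 1) * d + 1 in
  conv2 Xt (moll phi d) x y =
  RInt2 (fun a b => Xt a b * moll phi d (x - a) (y - b)) (c - W) (c + W) (e - W) (e + W).
Proof.
  intros Hphi Hsupp Hd HX Hxc Hye W.
  assert (HR : 0 < (Rabs K + 1) * d) by (pose proof (Rabs_pos K); nra).
  apply Rabs_le_between in Hxc. apply Rabs_le_between in Hye.
  assert (cm : cont2 (moll phi d)) by (apply cont2_rescale; auto).
  assert (Hm := moll_supported phi K d Hsupp Hd).
  set (m := moll phi d) in *.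
  set (A := fun a => RInt (fun z => Xt (x - a) z * m a (y - z)) (e - W) (e + W)).
  assert (Inner : forall a, RInt_gen (fun b => Xt (x - a) (y - b) * m a b)
                    (Rbar_locally m_infty) (Rbar_locally p_infty) = A a).
  { intros a. rewrite (RInt_gen_supported _ y e W ((Rabs K + 1) * d)); unfold W; try lra.
    - unfold A. apply RInt_ext. intros z _. replace (y - (y - z)) with z by ring. reflexivity.
    - intros z. apply (cont2_continuous_y (fun a b => Xt (x - a) (y - b) * m a b) a).
      apply cont2_mult; [apply cont2_reflect|]; auto.
    - intros z Hz. rewrite Hm by auto. ring. }
  unfold conv2, int_R2.
  rewrite (functional_extensionality _ _ Inner).
  rewrite (RInt_gen_supported A x c W ((Rabs K + 1) * d)); unfold W; try lra.
  - apply RInt_ext. intros z _. unfold A. apply RInt_ext. intros w _.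
    replace (x - (x - z)) with z by ring. reflexivity.
  - intros z. apply continuous_RInt_param.
    apply (cont2_mult (fun a z => Xt (x - a) z) (fun a z => m a (y - z))).
    + apply (cont2_comp2 Xt (fun a _ => x - a) (fun _ z => z)); auto using cont2_snd.
      apply cont2_minus; [apply cont2_const|apply cont2_fst].
    + apply (cont2_comp2 m (fun a _ => a) (fun _ z => y - z)); auto using cont2_fst.
      apply cont2_minus; [apply cont2_const|apply cont2_snd].
  - intros z Hz. apply RInt_zero_R. intros w. rewrite Hm by auto. apply Rmult_0_r.
Qed.

Lemma RInt2_periodic_weighted_le Xt (w : R -> R -> R) L Mw (n : nat) c e W :
  cont2 Xt -> periodic2 Xt -> int_cell (fun a b => Rabs (Xt a b)) <= L ->
  cont2 w -> (forall a b, Rabs (w a b) <= Mw) -> 0 <= W -> 2 * W <= 2 * PI * INR n ->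
  Rabs (RInt2 (fun a b => Xt a b * w a b) (c - W) (c + W) (e - W) (e + W)) <= Mw * (INR n * (INR n * L)).
Proof.
  intros HX HP HL Hw HMw HW HWn.
  assert (HMw0 : 0 <= Mw) by (pose proof (HMw 0 0); pose proof (Rabs_pos (w 0 0)); lra).
  eapply Rle_trans; [apply abs_RInt2_le; [cont2_auto|lra|lra]|].
  apply Rle_trans with (RInt2 (fun a b => Mw * Rabs (Xt a b)) (c - W) (c + W) (e - W) (e + W)).
  { apply RInt2_le; try cont2_auto; try lra.
    intros a b _ _. rewrite Rabs_mult, Rmult_comm. apply Rmult_le_compat_r; auto using Rabs_pos. }
  rewrite RInt2_scal by cont2_auto. apply Rmult_le_compat_l; auto.
  replace (c + W) with ((c - W) + 2 * W) by ring. replace (e + W) with ((e - W) + 2 * W) by ring.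
  eapply Rle_trans.
  - apply (RInt2_periodic_nonneg_le (fun a b => Rabs (Xt a b))) with (n := n); [cont2_auto| |intros; apply Rabs_pos|split; lra|split; lra].
    intros a b. rewrite (proj1 (HP a b)), (proj2 (HP a b)). auto.
  - pose proof (pos_INR n). apply Rmult_le_compat_l; auto. apply Rmult_le_compat_l; auto.
Qed.

Definition moll_dx (phi : R -> R -> R) (d : R) : R -> R -> R :=
  fun a b => / (d ^ 2) * / d * dx phi (a / d) (b / d).
Definition moll_dy (phi : R -> R -> R) (d : R) : R -> R -> R :=
  fun a b => / (d ^ 2) * / d * dy phi (a / d) (b / d).

Lemma Rabs_rescale_le (psi : R -> R -> R) k M d a b : (forall a b, Rabs (psi a b) <= M) ->
  Rabs (k * psi (a / d) (b / d)) <= Rabs k * M.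
Proof. intros H. rewrite Rabs_mult. apply Rmult_le_compat_l; auto using Rabs_pos. Qed.

Lemma is_derive_rescale_x (psi : R -> R -> R) d k w s : 0 < d ->
  (forall x y, ex_derive (fun x' => psi x' y) x) ->
  is_derive (fun s => k * psi (s / d) w) s (k * / d * dx psi (s / d) w).
Proof.
  intros Hd Hex. rewrite Rmult_assoc. apply is_derive_scal.
  apply (is_derive_comp (fun x' => psi x' w) (fun s => s / d)).
  - unfold dx. apply Derive_correct, Hex.
  - auto_derive; auto. field. lra.
Qed.

Lemma is_derive_rescale_y (psi : R -> R -> R) d k w s : 0 < d ->
  (forall x y, ex_derive (fun y' => psi x y') y) ->
  is_derive (fun s => k * psi w (s / d)) s (k * / d * dy psi w (s / d)).
Proof.
  intros Hd Hex. rewrite Rmult_assoc. apply is_derive_scal.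
  apply (is_derive_comp (fun y' => psi w y') (fun s => s / d)).
  - unfold dy. apply Derive_correct, Hex.
  - auto_derive; auto. field. lra.
Qed.

Section MollifierDerivatives.
Variables (phi : R -> R -> R) (K d : R).
Hypothesis Hphi : Ck 2 phi.
Hypothesis Hsupp : supported_in phi K.
Hypothesis Hd : 0 < d.

Lemma moll_taylor_x : exists C, 0 <= C /\ forall z h w,
  Rabs (moll phi d (z + h) w - moll phi d z w - h * moll_dx phi d z w) <= C * h ^ 2.
Proof.
  destruct Hphi as [_ [exx _ ] ]. destruct Hphi as [_ [_ [_ [[_ [exx1 [_ [cphi11 _]]]] _]]]].
  destruct (cont2_supported_bounded (dx (dx phi)) (Rabs K)) as [M [HM0 HM]]; auto.
  { apply supported_in_dx, supported_in_dx, supported_in_Rabs; auto using Rabs_pos. }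
  set (k := / d ^ 2 * / d * / d).
  exists (Rabs k * M). split; [apply Rmult_le_pos; auto using Rabs_pos|]. intros z h w.
  unfold moll, moll_dx.
  apply (taylor_remainder_le_of_second_derive (fun s => / d ^ 2 * phi (s / d) (w / d))
           (fun s => / d ^ 2 * / d * dx phi (s / d) (w / d)) (fun s => k * dx (dx phi) (s / d) (w / d))).
  - intros s. apply is_derive_rescale_x; auto.
  - intros s. apply (is_derive_rescale_x (dx phi)); auto.
  - intros s. apply Rabs_rescale_le; auto.
Qed.

Lemma moll_taylor_y : exists C, 0 <= C /\ forall z h w,
  Rabs (moll phi d w (z + h) - moll phi d w z - h * moll_dy phi d w z) <= C * h ^ 2.
Proof.
  destruct Hphi as [_ [_ [exy _]]]. destruct Hphi as [_ [_ [_ [_ [_ [_ [exy2 [_ cphi22]]]]]]]].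
  destruct (cont2_supported_bounded (dy (dy phi)) (Rabs K)) as [M [HM0 HM]]; auto.
  { apply supported_in_dy, supported_in_dy, supported_in_Rabs; auto using Rabs_pos. }
  set (k := / d ^ 2 * / d * / d).
  exists (Rabs k * M). split; [apply Rmult_le_pos; auto using Rabs_pos|]. intros z h w.
  unfold moll, moll_dy.
  apply (taylor_remainder_le_of_second_derive (fun s => / d ^ 2 * phi (w / d) (s / d))
           (fun s => / d ^ 2 * / d * dy phi (w / d) (s / d)) (fun s => k * dy (dy phi) (w / d) (s / d))).
  - intros s. apply is_derive_rescale_y; auto.
  - intros s. apply (is_derive_rescale_y (dy phi)); auto.
  - intros s. apply (Rabs_rescale_le (fun a b => dy (dy phi) a b)); auto.
Qed.

Variables (Xt : R -> R -> R) (BX : R).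
Hypothesis HX : cont2 Xt.
Hypothesis HBX : forall a b, Rabs (Xt a b) <= BX.

Let W := (Rabs K + 1) * d + 1.

Let HW : 0 < W.
Proof. unfold W. pose proof (Rabs_pos K). nra. Qed.

Let Hrem (C : R) (rem : R -> R -> R -> R) : 0 <= C ->
  (forall h a b, Rabs (rem h a b) <= C * h ^ 2) ->
  forall h a b, Rabs (Xt a b * rem h a b) <= BX * C * h ^ 2.
Proof.
  intros HC H h a b. rewrite Rabs_mult, !Rmult_assoc.
  apply Rmult_le_compat; auto using Rabs_pos.
Qed.

Lemma is_derive_conv2_moll_x x0 y0 : is_derive (fun x => conv2 Xt (moll phi d) x y0) x0
  (RInt2 (fun a b => Xt a b * moll_dx phi d (x0 - a) (y0 - b)) (x0 - W) (x0 + W) (y0 - W) (y0 + W)).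
Proof.
  assert (cphi : cont2 phi) by apply Hphi.
  assert (cphi1 : cont2 (dx phi)) by apply Hphi.
  destruct moll_taylor_x as [C [HC0 HC]].
  apply is_derive_ext_loc with (fun s => RInt2 (fun a b => Xt a b * moll phi d (s - a) (y0 - b))
      (x0 - W) (x0 + W) (y0 - W) (y0 + W)).
  - exists (mkposreal 1 Rlt_0_1). intros s Hs. change (Rabs (s - x0) < 1) in Hs.
    symmetry. apply conv2_moll_RInt2; auto; [lra|]. rewrite Rminus_diag, Rabs_R0; lra.
  - apply is_derive_RInt2_quadratic with (C := BX * C); try lra.
    + intros s. apply cont2_mult, cont2_reflect, cont2_rescale; auto.
    + apply cont2_mult, cont2_reflect, cont2_rescale; auto.
    + intros h a b. replace (x0 + h - a) with (x0 - a + h) by ring.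
      replace (Xt a b * moll phi d (x0 - a + h) (y0 - b) - Xt a b * moll phi d (x0 - a) (y0 - b)
               - h * (Xt a b * moll_dx phi d (x0 - a) (y0 - b)))
        with (Xt a b * (moll phi d (x0 - a + h) (y0 - b) - moll phi d (x0 - a) (y0 - b)
               - h * moll_dx phi d (x0 - a) (y0 - b))) by ring.
      apply (Hrem C (fun h a b => moll phi d (x0 - a + h) (y0 - b) - moll phi d (x0 - a) (y0 - b)
               - h * moll_dx phi d (x0 - a) (y0 - b))); auto.
Qed.

Lemma is_derive_conv2_moll_y x0 y0 : is_derive (fun y => conv2 Xt (moll phi d) x0 y) y0
  (RInt2 (fun a b => Xt a b * moll_dy phi d (x0 - a) (y0 - b)) (x0 - W) (x0 + W) (y0 - W) (y0 + W)).
Proof.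
  assert (cphi : cont2 phi) by apply Hphi.
  assert (cphi2 : cont2 (dy phi)) by apply Hphi.
  destruct moll_taylor_y as [C [HC0 HC]].
  apply is_derive_ext_loc with (fun s => RInt2 (fun a b => Xt a b * moll phi d (x0 - a) (s - b))
      (x0 - W) (x0 + W) (y0 - W) (y0 + W)).
  - exists (mkposreal 1 Rlt_0_1). intros s Hs. change (Rabs (s - y0) < 1) in Hs.
    symmetry. apply conv2_moll_RInt2; auto; [|lra]. rewrite Rminus_diag, Rabs_R0; lra.
  - apply is_derive_RInt2_quadratic with (C := BX * C); try lra.
    + intros s. apply cont2_mult, cont2_reflect, cont2_rescale; auto.
    + apply cont2_mult, cont2_reflect, cont2_rescale; auto.
    + intros h a b. replace (y0 + h - b) with (y0 - b + h) by ring.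
      replace (Xt a b * moll phi d (x0 - a) (y0 - b + h) - Xt a b * moll phi d (x0 - a) (y0 - b)
               - h * (Xt a b * moll_dy phi d (x0 - a) (y0 - b)))
        with (Xt a b * (moll phi d (x0 - a) (y0 - b + h) - moll phi d (x0 - a) (y0 - b)
               - h * moll_dy phi d (x0 - a) (y0 - b))) by ring.
      apply (Hrem C (fun h a b => moll phi d (x0 - a) (y0 - b + h) - moll phi d (x0 - a) (y0 - b)
               - h * moll_dy phi d (x0 - a) (y0 - b))); auto.
Qed.
End MollifierDerivatives.

Lemma C2_supported_bounds phi K : Ck 2 phi -> supported_in phi K ->
  exists M, 0 <= M /\ forall a b, Rabs (phi a b) <= M /\ Rabs (dx phi a b) <= M /\ Rabs (dy phi a b) <= M.
Proof.
  intros [cphi [_ [_ [[cphi1 _] [cphi2 _]]]]] Hs.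
  pose proof (supported_in_Rabs phi K Hs) as HsA.
  destruct (cont2_supported_bounded phi K) as [M0 [H0 HM0]]; auto.
  destruct (cont2_supported_bounded (dx phi) (Rabs K)) as [M1 [H1 HM1]]; auto using supported_in_dx, Rabs_pos.
  destruct (cont2_supported_bounded (dy phi) (Rabs K)) as [M2 [H2 HM2]]; auto using supported_in_dy, Rabs_pos.
  exists (Rmax M0 (Rmax M1 M2)). split; [apply Rmax_Rle; auto|].
  intros a b. repeat split.
  - eapply Rle_trans; [apply HM0|apply Rmax_l].
  - eapply Rle_trans; [apply HM1|]. eapply Rle_trans; [apply Rmax_l|apply Rmax_r].
  - eapply Rle_trans; [apply HM2|]. eapply Rle_trans; [apply Rmax_r|apply Rmax_r].
Qed.

(** The kernel [phi_d] and its partial derivatives are [O(d^-2)] and [O(d^-3)],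
    and they are integrated against [|Xt|] over a square of side [O(1)], hence
    over at most [n^2] period cells. *)
Lemma conv2_moll_estimates phi K Mphi d Xt L (n : nat) x y :
  Ck 2 phi -> supported_in phi K ->
  (forall a b, Rabs (phi a b) <= Mphi /\ Rabs (dx phi a b) <= Mphi /\ Rabs (dy phi a b) <= Mphi) ->
  0 < d <= 1 -> Rabs K + 2 <= INR n ->
  cont2 Xt -> (exists BX, forall a b, Rabs (Xt a b) <= BX) -> periodic2 Xt ->
  int_cell (fun a b => Rabs (Xt a b)) <= L ->
  let N := Mphi * (INR n * (INR n * L)) in
  Rabs (conv2 Xt (moll phi d) x y) <= N / d ^ 2 /\
  (exists D, is_derive (fun x' => conv2 Xt (moll phi d) x' y) x D /\ Rabs D <= N / (d ^ 2 * d)) /\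
  (exists D, is_derive (fun y' => conv2 Xt (moll phi d) x y') y D /\ Rabs D <= N / (d ^ 2 * d)).
Proof.
  intros Hphi Hs HM Hd Hn HX [BX HBX] HP HL N.
  assert (cphi : cont2 phi) by apply Hphi.
  assert (cphi1 : cont2 (dx phi)) by apply Hphi.
  assert (cphi2 : cont2 (dy phi)) by apply Hphi.
  set (W := (Rabs K + 1) * d + 1).
  assert (HW : 0 <= W /\ 2 * W <= 2 * PI * INR n).
  { unfold W. pose proof (Rabs_pos K). pose proof PI_RGT_0. pose proof (pos_INR n).
    assert ((Rabs K + 1) * d <= Rabs K + 1) by nra.
    assert (INR n <= PI * INR n) by (pose proof PI2_1; rewrite <- (Rmult_1_l (INR n)) at 1; apply Rmult_le_compat_r; lra).
    assert (0 <= (Rabs K + 1) * d) by nra. split; lra. }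
  assert (Hk2 : Rabs (/ d ^ 2) * Mphi * (INR n * (INR n * L)) = N / d ^ 2).
  { rewrite Rabs_right by (apply Rle_ge, Rlt_le, Rinv_0_lt_compat, pow_lt; lra).
    unfold N. field. lra. }
  assert (Hk3 : Rabs (/ d ^ 2 * / d) * Mphi * (INR n * (INR n * L)) = N / (d ^ 2 * d)).
  { rewrite Rabs_right.
    - unfold N. field. lra.
    - apply Rle_ge, Rlt_le. rewrite <- Rinv_mult. apply Rinv_0_lt_compat, Rmult_lt_0_compat; [apply pow_lt|]; lra. }
  split; [|split].
  - rewrite (conv2_moll_RInt2 phi K d Xt x y x y) by (auto; try lra; rewrite Rminus_diag, Rabs_R0; lra).
    rewrite <- Hk2. apply RInt2_periodic_weighted_le; try tauto.
    + apply cont2_reflect, cont2_rescale; auto.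
    + intros a b. apply Rabs_rescale_le. apply HM.
  - eexists. split; [apply (is_derive_conv2_moll_x phi K d Hphi Hs (proj1 Hd) Xt BX HX HBX)|].
    rewrite <- Hk3. apply RInt2_periodic_weighted_le; try tauto.
    + apply cont2_reflect, cont2_rescale; auto.
    + intros a b. apply Rabs_rescale_le. apply HM.
  - eexists. split; [apply (is_derive_conv2_moll_y phi K d Hphi Hs (proj1 Hd) Xt BX HX HBX)|].
    rewrite <- Hk3. apply RInt2_periodic_weighted_le; try tauto.
    + apply cont2_reflect, cont2_rescale; auto.
    + intros a b. apply Rabs_rescale_le. apply HM.
Qed.

Lemma Rpower_pos_lt_1 eps alpha : 0 < eps < 1 -> 0 < alpha -> 0 < Rpower eps alpha < 1.
Proof.
  intros He Ha. unfold Rpower. split; [apply exp_pos|].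
  rewrite <- exp_0. apply exp_increasing.
  assert (ln eps < 0) by (rewrite <- ln_1; apply ln_increasing; lra). nra.
Qed.

Lemma Rpower_2_mult eps alpha : Rpower eps (2 * alpha) = Rpower eps alpha ^ 2.
Proof. replace (2 * alpha) with (alpha + alpha) by ring. rewrite Rpower_plus. ring. Qed.

Lemma Rpower_3_mult eps alpha : Rpower eps (3 * alpha) = Rpower eps alpha ^ 2 * Rpower eps alpha.
Proof. replace (3 * alpha) with (alpha + alpha + alpha) by ring. rewrite !Rpower_plus. ring. Qed.

Lemma le_div_plus_1 a N x : 0 < x -> a <= N / x -> a <= (N + 1) / x.
Proof.
  intros Hx H. eapply Rle_trans; [exact H|].
  apply Rmult_le_compat_r; [left; apply Rinv_0_lt_compat|]; lra.
Qed.

Theorem mainTheorem8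
  (u v : R -> R -> R -> R -> R)          (* u eps x y t, v eps x y t *)
  (rho0 : R -> R -> R -> R)              (* rho0 eps x y *)
  (X : R -> R -> R -> R -> R)            (* X eps x y t *)
  (phi : R -> R -> R) (alpha : R)
  (Hu_per : forall eps, 0 < eps < 1 -> forall t, 0 <= t ->
     periodic2 (fun x y => u eps x y t) /\ periodic2 (fun x y => v eps x y t))
  (Hu_cont : forall eps, 0 < eps < 1 -> cont_Cb (u eps) /\ cont_Cb (v eps))
  (Hu_bd : exists B, forall eps, 0 < eps < 1 -> forall x y t, 0 <= t ->
     Rabs (u eps x y t) <= B /\ Rabs (v eps x y t) <= B)
  (Hr0_Cb : forall eps, 0 < eps < 1 -> Cb (rho0 eps))
  (Hr0_per : forall eps, 0 < eps < 1 -> periodic2 (rho0 eps))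
  (Hr0_L1 : exists C, forall eps, 0 < eps < 1 ->
     int_cell (fun x y => Rabs (rho0 eps x y)) <= C)
  (HX : forall eps, 0 < eps < 1 ->
     is_C1_solution eps (u eps) (v eps) (X eps) (rho0 eps))
  (Hphi_smooth : smooth2 phi)
  (Hphi_supp : compact_support2 phi)
  (Hphi_int : int_R2 phi = 1)
  (Halpha : 0 < alpha <= 1) :
  exists M, 0 < M /\
    forall eps, 0 < eps < 1 -> forall x y t, 0 <= t ->
      Rabs (rho X phi alpha eps x y t) <= M / Rpower eps (2 * alpha) /\
      (exists d, is_derive (fun x' => rho X phi alpha eps x' y t) x d /\
                 Rabs d <= M / Rpower eps (3 * alpha)) /\
      (exists d, is_derive (fun y' => rho X phi alpha eps x y' t) y d /\
                 Rabs d <= M / Rpower eps (3 * alpha)).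
Proof.
  destruct Hu_bd as [B HB], Hr0_L1 as [C HC], Hphi_supp as [K HK].
  destruct (C2_supported_bounds phi K (Hphi_smooth 2%nat) HK) as [Mphi [HM0 HM]].
  destruct (INR_archimed 1 (Rabs K + 2)) as [n Hn]; [lra|].
  set (L := Rmax C 0).
  assert (HN : 0 <= Mphi * (INR n * (INR n * L))).
  { pose proof (pos_INR n). repeat apply Rmult_le_pos; auto. apply Rmax_r. }
  exists (Mphi * (INR n * (INR n * L)) + 1). split; [lra|].
  intros eps Heps x y t Ht.
  pose proof (Rpower_pos_lt_1 eps alpha Heps (proj1 Halpha)) as Hd.
  assert (HXt : Cb (fun a b => X eps a b t)) by (apply (HX eps Heps); auto).
  assert (HBe : forall x y s, 0 <= s -> Rabs (u eps x y s) <= B /\ Rabs (v eps x y s) <= B)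
    by (intros; apply HB; auto).
  assert (HP : forall s, 0 <= s -> periodic2 (fun a b => X eps a b s))
    by (apply (solution_periodic eps (u eps) (v eps) (X eps) (rho0 eps) B); auto; lra).
  assert (HL : int_cell (fun a b => Rabs (X eps a b t)) <= L).
  { eapply Rle_trans; [|eapply Rle_trans; [apply (HC eps Heps)|apply Rmax_l]].
    apply (solution_L1_le eps (u eps) (v eps) (X eps) (rho0 eps) B); auto; lra. }
  destruct (conv2_moll_estimates phi K Mphi (Rpower eps alpha) (fun a b => X eps a b t) L n x y)
    as [Hrho [[D1 [HD1 HB1]] [D2 [HD2 HB2]]]]; auto; [lra|lra|apply HXt|apply HXt|].
  unfold rho. rewrite Rpower_2_mult, Rpower_3_mult.
  assert (0 < Rpower eps alpha ^ 2) by (apply pow_lt; lra).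
  assert (0 < Rpower eps alpha ^ 2 * Rpower eps alpha) by (apply Rmult_lt_0_compat; lra).
  split; [|split; [exists D1|exists D2]]; auto using le_div_plus_1.
Qed.
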